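(* For every $A>0$ and $f\in\mathcal F$, $$\partial^2_{xx}E_f\!\left(\tfrac12,\tfrac{\sqrt3}{2},A\right)=\partial^2_{yy}E_f\!\left(\tfrac12,\tfrac{\sqrt3}{2},A\right)=T_f(A),$$ where $$T_f(A):=\frac{4A}{\sqrt3}\sum_{m,n}n^2f'\!\left(\frac{2A}{\sqrt3}[m^2+mn+n^2]\right)+\frac{4A^2}{3}\sum_{m,n}n^4f''\!\left(\frac{2A}{\sqrt3}[m^2+mn+n^2]\right),$$ and $\partial^2_{xy}E_f\!\left(\tfrac12,\tfrac{\sqrt3}{2},A\right)=\partial^2_{yx}E_f\!\left(\tfrac12,\tfrac{\sqrt3}{2},A\right)=0$. Consequently, if $T_f(A)>0$ then $(1/2,\sqrt3/2)$ is a strict local minimizer of $(x,y)\mapsto E_f(x,y,A)$, and if $T_f(A)<0$ it is a strict local maximizer.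
   Context: $\mathcal F$ is the set of $f\in C^2((0,\infty))$ such that for each $k\in\{0,1,2\}$ there is $\eta_k>1$ with $|f^{(k)}(r)|=O(r^{-\eta_k-k})$ as $r\to\infty$. For $f\in\mathcal F$, $A>0$, $x\in\mathbb R$, $y>0$, $E_f(x,y,A)=\sum_{m,n} f\left(A\left[\frac1y(m+xn)^2+yn^2\right]\right)$, where $\sum_{m,n}$ denotes summation over all $(m,n)\in\mathbb Z^2\setminus\{(0,0)\}$. *)

From Stdlib Require Import Reals ZArith ClassicalEpsilon.
Open Scope R_scope.

(* Summation over the punctured lattice Z^2 \ {(0,0)}.
   Partial sums over the square [-N,N]^2 (origin removed). *)
Definition sq_sum (F : Z -> Z -> R) (N : nat) : R :=
  sum_f_R0 (fun i =>
    sum_f_R0 (fun j =>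
      let m := (Z.of_nat i - Z.of_nat N)%Z in
      let n := (Z.of_nat j - Z.of_nat N)%Z in
      if andb (Z.eqb m 0) (Z.eqb n 0) then 0 else F m n) (2 * N)) (2 * N).

(* The lattice sum: the limit of the square partial sums (for the absolutely
   convergent sums of the paper this is the sum).  Chosen by epsilon. *)
Definition lattice_sum (F : Z -> Z -> R) : R :=
  epsilon (inhabits 0) (fun l => Un_cv (sq_sum F) l).

Definition decay (g : R -> R) (k : R) : Prop :=
  exists eta, 1 < eta /\ exists C R0, 0 < R0 /\
    forall r, R0 <= r -> Rabs (g r) <= C * Rpower r (- (eta + k)).

Definition in_F (f f1 f2 : R -> R) : Prop :=
  (forall r, 0 < r -> derivable_pt_lim f r (f1 r)) /\
  (forall r, 0 < r -> derivable_pt_lim f1 r (f2 r)) /\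
  (forall r, 0 < r -> continuity_pt f2 r) /\
  decay f 0 /\ decay f1 1 /\ decay f2 2.

Definition E_f (f : R -> R) (x y A : R) : R :=
  lattice_sum (fun m n =>
    f (A * (/ y * (IZR m + x * IZR n) ^ 2 + y * IZR n ^ 2))).

Definition T_f (f1 f2 : R -> R) (A : R) : R :=
  4 * A / sqrt 3 *
    lattice_sum (fun m n => IZR n ^ 2 *
      f1 (2 * A / sqrt 3 * (IZR m ^ 2 + IZR m * IZR n + IZR n ^ 2)))
  + 4 * A ^ 2 / 3 *
    lattice_sum (fun m n => IZR n ^ 4 *
      f2 (2 * A / sqrt 3 * (IZR m ^ 2 + IZR m * IZR n + IZR n ^ 2))).

Definition strict_local_min (g : R -> R -> R) (x0 y0 : R) : Prop :=
  exists d, 0 < d /\ forall x y, Rabs (x - x0) < d -> Rabs (y - y0) < d ->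
    0 < y -> (x, y) <> (x0, y0) -> g x0 y0 < g x y.

Definition strict_local_max (g : R -> R -> R) (x0 y0 : R) : Prop :=
  exists d, 0 < d /\ forall x y, Rabs (x - x0) < d -> Rabs (y - y0) < d ->
    0 < y -> (x, y) <> (x0, y0) -> g x y < g x0 y0.

(* E_f sums f(A Q_{x,y}(m,n)) over the punctured lattice, with the positive definite form
   Q_{x,y}(m,n) = (m + x n)^2 / y + y n^2.  Near the hexagonal point the summand and its first two
   (x, y)-derivatives are bounded by |(m,n)|^(-2 eta) with eta > 1, so the square partial sums
   converge uniformly (with a tail of order N^(2 - 2 eta)) and E_f can be differentiated termwise
   twice.  At (1/2, sqrt 3 / 2) the form becomes (2/sqrt 3)(m^2 + m n + n^2), which is invariant
   under (m,n) -> (n,m) and (m,n) -> (-m-n, n).  These symmetries give linear relations between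
   the moments sum f^(j)(...) m^a n^b with a + b = 2j; by them the gradient and the mixed second
   derivatives vanish and both pure second derivatives equal T_f(A).  The extremum statements then
   follow from a second-order Taylor argument along segments, using continuity of the Hessian. *)

From Coquelicot Require Import Coquelicot.
From Stdlib Require Import Reals ZArith Lra Lia Psatz ClassicalEpsilon FunctionalExtensionality.
Open Scope R_scope.

Lemma Rpower_pos x y : 0 < Rpower x y.
Proof. apply exp_pos. Qed.

Lemma Rpower_opp_le_compat s x y : 0 <= s -> 0 < x <= y -> Rpower y (- s) <= Rpower x (- s).
Proof.
  intros Hs Hxy. rewrite !Rpower_Ropp.
  apply Rinv_le_contravar; [apply Rpower_pos | apply Rle_Rpower_l; lra].
Qed.

Lemma Rpower_2 x : 0 < x -> Rpower x 2 = x * x.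
Proof. intros Hx. replace 2 with (INR 2) by (simpl; ring). rewrite Rpower_pow by lra. ring. Qed.

Lemma Rpower_opp_lt s eps : 0 < s -> 0 < eps ->
  exists X, 0 < X /\ forall x, X <= x -> Rpower x (- s) < eps.
Proof.
  intros Hs He. exists (exp (- ln eps / s) + 1).
  assert (Hexp := exp_pos (- ln eps / s)). split; [lra|].
  intros x Hx. unfold Rpower. rewrite <- (exp_ln eps He). apply exp_increasing.
  assert (Hln : - ln eps / s < ln x).
  { rewrite <- (ln_exp (- ln eps / s)). apply ln_increasing; lra. }
  apply (Rmult_lt_compat_l s) in Hln; [|lra].
  replace (s * (- ln eps / s)) with (- ln eps) in Hln by (field; lra). nra.
Qed.

(* Mean value theorem for [t^(-s)] on [k-1, k]. *)
Lemma Rpower_opp_le_telescope s k : 0 < s -> 1 <= k - 1 ->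
  Rpower k (- (1 + s)) <= (Rpower (k - 1) (- s) - Rpower k (- s)) / s.
Proof.
  intros Hs Hk.
  destruct (MVT_cor2 (fun t => Rpower t (- s)) (fun t => - s * Rpower t (- s - 1)) (k - 1) k)
    as [c [Hc Hck]]; [lra | intros c Hc; apply derivable_pt_lim_power; lra |].
  assert (Hkc : Rpower k (- (1 + s)) <= Rpower c (- (1 + s))) by (apply Rpower_opp_le_compat; lra).
  replace (- s - 1) with (- (1 + s)) in Hc by ring.
  apply (Rmult_le_reg_l s); [lra|].
  replace (s * ((Rpower (k - 1) (- s) - Rpower k (- s)) / s))
    with (- (Rpower k (- s) - Rpower (k - 1) (- s))) by (field; lra).
  rewrite Hc. nra.
Qed.

Lemma INR_ge_1 K : (1 <= K)%nat -> 1 <= INR K.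
Proof. intros HK. apply (le_INR 1). exact HK. Qed.

Lemma seq_tail_bound (a : nat -> R) (D s : R) (K : nat) :
  0 <= D -> 0 < s -> (1 <= K)%nat ->
  (forall N, (K <= N)%nat -> Rabs (a (S N) - a N) <= D * Rpower (INR (S N)) (- (1 + s))) ->
  forall N t, (K <= N)%nat ->
  Rabs (a (N + t)%nat - a N) <= D * (Rpower (INR N) (- s) - Rpower (INR (N + t)) (- s)) / s.
Proof.
  intros HD Hs HK Hinc N t HN. induction t as [|t IH].
  - rewrite Nat.add_0_r, Rminus_diag, Rminus_diag, Rabs_R0. unfold Rdiv. lra.
  - replace (N + S t)%nat with (S (N + t)) by lia.
    assert (HNt : 1 <= INR (N + t)) by (apply INR_ge_1; lia).
    assert (Htele := Rpower_opp_le_telescope s (INR (S (N + t))) Hs).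
    rewrite S_INR, Rplus_minus_r, <- S_INR in Htele. specialize (Htele HNt).
    replace (a (S (N + t)) - a N) with ((a (S (N + t)) - a (N + t)%nat) + (a (N + t)%nat - a N)) by ring.
    eapply Rle_trans; [apply Rabs_triang|].
    eapply Rle_trans; [apply Rplus_le_compat; [apply Hinc; lia | exact IH]|].
    apply Rmult_le_compat_l with (r := D) in Htele; [|exact HD].
    unfold Rdiv in *. lra.
Qed.

(** * Square partial sums of decaying lattice functions *)

Definition centered_sum (g : Z -> R) (N : nat) : R :=
  sum_f_R0 (fun i => g (Z.of_nat i - Z.of_nat N)%Z) (2 * N).

Definition punctured (F : Z -> Z -> R) (m n : Z) : R :=
  if andb (Z.eqb m 0) (Z.eqb n 0) then 0 else F m n.

Lemma sq_sum_centered F N :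
  sq_sum F N = centered_sum (fun m => centered_sum (fun n => punctured F m n) N) N.
Proof. reflexivity. Qed.

Lemma sum_f_R0_shift (a : nat -> R) M : sum_f_R0 a (S M) = a 0%nat + sum_f_R0 (fun i => a (S i)) M.
Proof. rewrite decomp_sum by lia. reflexivity. Qed.

Lemma centered_sum_S g N :
  centered_sum g (S N) = centered_sum g N + g (Z.of_nat (S N)) + g (- Z.of_nat (S N))%Z.
Proof.
  unfold centered_sum. replace (2 * S N)%nat with (S (S (2 * N))) by lia.
  rewrite sum_f_R0_shift, tech5.
  replace (Z.of_nat 0 - Z.of_nat (S N))%Z with (- Z.of_nat (S N))%Z by lia.
  replace (Z.of_nat (S (S (2 * N))) - Z.of_nat (S N))%Z with (Z.of_nat (S N)) by lia.
  rewrite (sum_eq _ (fun i => g (Z.of_nat i - Z.of_nat N)%Z)); [ring|].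
  intros i _. f_equal. lia.
Qed.

Lemma centered_sum_ext a b N :
  (forall z, (- Z.of_nat N <= z <= Z.of_nat N)%Z -> a z = b z) ->
  centered_sum a N = centered_sum b N.
Proof. intros H. apply sum_eq. intros i Hi. apply H. lia. Qed.

Lemma centered_sum_minus a b N :
  centered_sum (fun z => a z - b z) N = centered_sum a N - centered_sum b N.
Proof. apply minus_sum. Qed.

Lemma centered_sum_bound g N B :
  (forall z, (- Z.of_nat N <= z <= Z.of_nat N)%Z -> Rabs (g z) <= B) ->
  Rabs (centered_sum g N) <= (2 * INR N + 1) * B.
Proof.
  intros H. unfold centered_sum. eapply Rle_trans; [apply Rsum_abs|].
  eapply Rle_trans; [apply (sum_Rle _ (fun _ => B)); intros i Hi; apply H; lia|].
  rewrite sum_cte, S_INR, mult_INR. simpl (INR 2). lra.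
Qed.

Definition sup_norm (m n : Z) : R := Rmax (Rabs (IZR m)) (Rabs (IZR n)).

Lemma sup_norm_ge_l m n : Rabs (IZR m) <= sup_norm m n.
Proof. apply Rmax_l. Qed.

Lemma sup_norm_ge_r m n : Rabs (IZR n) <= sup_norm m n.
Proof. apply Rmax_r. Qed.

Lemma sup_norm_ge_1 m n : (m <> 0 \/ n <> 0)%Z -> 1 <= sup_norm m n.
Proof.
  assert (H1 : forall z, z <> 0%Z -> 1 <= Rabs (IZR z)).
  { intros z Hz. rewrite <- abs_IZR. apply IZR_le. lia. }
  intros [Hm|Hn]; [eapply Rle_trans; [|apply sup_norm_ge_l] | eapply Rle_trans; [|apply sup_norm_ge_r]]; auto.
Qed.

Lemma Rabs_IZR_of_nat k : Rabs (IZR (Z.of_nat k)) = INR k.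
Proof. rewrite <- INR_IZR_INZ. apply Rabs_pos_eq, pos_INR. Qed.

Lemma Rabs_IZR_opp_of_nat k : Rabs (IZR (- Z.of_nat k)) = INR k.
Proof. rewrite opp_IZR, Rabs_Ropp. apply Rabs_IZR_of_nat. Qed.

(* The two new rows and the two new columns of the square [-(N+1), N+1]^2. *)
Lemma sq_sum_S_bound F N B :
  (forall m n, INR (S N) <= sup_norm m n -> Rabs (punctured F m n) <= B) ->
  Rabs (sq_sum F (S N) - sq_sum F N) <= (8 * INR N + 8) * B.
Proof.
  intros H. set (G := punctured F).
  assert (Hrow : forall m, Rabs (IZR m) = INR (S N) ->
    Rabs (centered_sum (fun n => G m n) (S N)) <= (2 * INR (S N) + 1) * B).
  { intros m Hm. apply centered_sum_bound. intros n _. apply H. rewrite <- Hm. apply sup_norm_ge_l. }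
  assert (Hcol : Rabs (centered_sum (fun m =>
      centered_sum (fun n => G m n) (S N) - centered_sum (fun n => G m n) N) N) <= (2 * INR N + 1) * (B + B)).
  { apply centered_sum_bound. intros m _. rewrite centered_sum_S.
    replace (centered_sum (fun n => G m n) N + G m (Z.of_nat (S N)) + G m (- Z.of_nat (S N))%Z
      - centered_sum (fun n => G m n) N) with (G m (Z.of_nat (S N)) + G m (- Z.of_nat (S N))%Z) by ring.
    eapply Rle_trans; [apply Rabs_triang|]. apply Rplus_le_compat; apply H;
      [rewrite <- (Rabs_IZR_of_nat (S N)) | rewrite <- (Rabs_IZR_opp_of_nat (S N))]; apply sup_norm_ge_r. }
  rewrite !sq_sum_centered. fold G. rewrite centered_sum_S.
  replace (centered_sum (fun m => centered_sum (fun n => G m n) (S N)) N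
      + centered_sum (fun n => G (Z.of_nat (S N)) n) (S N) + centered_sum (fun n => G (- Z.of_nat (S N))%Z n) (S N)
      - centered_sum (fun m => centered_sum (fun n => G m n) N) N)
    with (centered_sum (fun m => centered_sum (fun n => G m n) (S N) - centered_sum (fun n => G m n) N) N
      + centered_sum (fun n => G (Z.of_nat (S N)) n) (S N) + centered_sum (fun n => G (- Z.of_nat (S N))%Z n) (S N))
    by (rewrite centered_sum_minus; ring).
  specialize (Hrow (Z.of_nat (S N)) (Rabs_IZR_of_nat _)) as Hr1.
  specialize (Hrow (- Z.of_nat (S N))%Z (Rabs_IZR_opp_of_nat _)) as Hr2.
  rewrite S_INR in Hr1, Hr2.
  eapply Rle_trans; [apply Rabs_triang|]. eapply Rle_trans; [apply Rplus_le_compat_r, Rabs_triang|].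
  lra.
Qed.

Definition lattice_decay (F : Z -> Z -> R) (K : nat) (C p : R) : Prop :=
  (1 <= K)%nat /\ 0 <= C /\ 2 < p /\
  forall m n, INR K <= sup_norm m n -> Rabs (F m n) <= C * Rpower (sup_norm m n) (- p).

Definition decay_tail (C p : R) (N : nat) : R := 8 * C * Rpower (INR N) (- (p - 2)) / (p - 2).

Lemma decay_tail_lt K C p : 0 <= C -> 2 < p -> forall e, 0 < e ->
  exists N0, forall N, (N0 <= N)%nat -> (K <= N)%nat /\ decay_tail C p N < e.
Proof.
  intros HC Hp e He.
  destruct (Rpower_opp_lt (p - 2) (e * (p - 2) / (8 * C + 1))) as [X [HX HXs]];
    [lra | apply Rdiv_lt_0_compat; nra |].
  destruct (INR_unbounded X) as [N0 HN0].
  exists (max N0 K). intros N HN. split; [lia|].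
  assert (HXN : X <= INR N) by (pose proof (le_INR N0 N ltac:(lia)); lra).
  specialize (HXs _ HXN).
  apply (Rmult_lt_compat_l (8 * C + 1)) in HXs; [|lra].
  replace ((8 * C + 1) * (e * (p - 2) / (8 * C + 1))) with (e * (p - 2)) in HXs by (field; lra).
  pose proof (Rpower_pos (INR N) (- (p - 2))).
  unfold decay_tail. apply (Rmult_lt_reg_r (p - 2)); [lra|].
  unfold Rdiv. rewrite Rmult_assoc, Rinv_l, Rmult_1_r by lra. nra.
Qed.

Lemma punctured_eq F m n : (m <> 0 \/ n <> 0)%Z -> punctured F m n = F m n.
Proof. intros H. unfold punctured. destruct (Z.eqb_spec m 0), (Z.eqb_spec n 0); simpl; auto. lia. Qed.

Lemma punctured_far F m n : 0 < sup_norm m n -> punctured F m n = F m n.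
Proof.
  intros H. apply punctured_eq. destruct (Z.eq_dec m 0), (Z.eq_dec n 0); auto. subst.
  unfold sup_norm in H. rewrite Rabs_R0, Rmax_left in H; lra.
Qed.

Section DecayingLatticeSums.

Variables (F : Z -> Z -> R) (K : nat) (C p : R).
Hypothesis HF : lattice_decay F K C p.

Lemma lattice_decay_sq_sum_S N : (K <= N)%nat ->
  Rabs (sq_sum F (S N) - sq_sum F N) <= (8 * C) * Rpower (INR (S N)) (- (1 + (p - 2))).
Proof.
  destruct HF as (HK & HC & Hp & Hb). intros HN.
  assert (HSN : 1 <= INR (S N)) by (apply INR_ge_1; lia).
  eapply Rle_trans; [apply (sq_sum_S_bound F N (C * Rpower (INR (S N)) (- p)))|].
  - intros m n Hk. rewrite punctured_far by lra.
    assert (HKk : INR K <= sup_norm m n) by (pose proof (le_INR K (S N) ltac:(lia)); lra).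
    eapply Rle_trans; [apply Hb, HKk|].
    apply Rmult_le_compat_l; [lra|]. apply Rpower_opp_le_compat; lra.
  - replace (- (1 + (p - 2))) with (1 + - p) by ring.
    rewrite Rpower_plus, Rpower_1, S_INR by lra. right; ring.
Qed.

Lemma lattice_decay_sq_sum_diff N t : (K <= N)%nat ->
  Rabs (sq_sum F (N + t) - sq_sum F N) <= decay_tail C p N.
Proof.
  destruct HF as (HK & HC & Hp & _). intros HN.
  eapply Rle_trans; [apply (seq_tail_bound (sq_sum F) (8 * C) (p - 2) K); auto; try lra;
    intros; apply lattice_decay_sq_sum_S; auto|].
  unfold decay_tail, Rdiv. apply Rmult_le_compat_r; [apply Rlt_le, Rinv_0_lt_compat; lra|].
  pose proof (Rpower_pos (INR (N + t)) (- (p - 2))). nra.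
Qed.

Lemma lattice_decay_cv : exists l, Un_cv (sq_sum F) l /\
  forall N, (K <= N)%nat -> Rabs (l - sq_sum F N) <= decay_tail C p N.
Proof.
  destruct HF as (HK & HC & Hp & _).
  assert (Hc : Cauchy_crit (sq_sum F)).
  { intros e He. destruct (decay_tail_lt K C p HC Hp (e / 2) ltac:(lra)) as [N0 HN0].
    destruct (HN0 N0 (le_n _)) as [HKN0 Hsmall].
    exists N0. intros n m Hn Hm. unfold Rdist.
    pose proof (lattice_decay_sq_sum_diff N0 (n - N0) HKN0) as Hn'.
    pose proof (lattice_decay_sq_sum_diff N0 (m - N0) HKN0) as Hm'.
    replace (N0 + (n - N0))%nat with n in Hn' by lia.
    replace (N0 + (m - N0))%nat with m in Hm' by lia.
    replace (sq_sum F n - sq_sum F m) with ((sq_sum F n - sq_sum F N0) - (sq_sum F m - sq_sum F N0)) by ring.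
    eapply Rle_lt_trans; [apply Rabs_triang|]. rewrite Rabs_Ropp. lra. }
  destruct (R_complete _ Hc) as [l Hl]. exists l. split; auto.
  intros N HN. apply Rnot_lt_le. intros Hlt.
  destruct (Hl (Rabs (l - sq_sum F N) - decay_tail C p N) ltac:(lra)) as [M HM].
  specialize (HM (N + M)%nat ltac:(lia)). unfold Rdist in HM.
  pose proof (lattice_decay_sq_sum_diff N M HN).
  replace (l - sq_sum F N) with (- (sq_sum F (N + M) - l) + (sq_sum F (N + M) - sq_sum F N)) in * by ring.
  pose proof (Rabs_triang (- (sq_sum F (N + M) - l)) (sq_sum F (N + M) - sq_sum F N)).
  rewrite Rabs_Ropp in *. lra.
Qed.

End DecayingLatticeSums.

Definition summable (F : Z -> Z -> R) : Prop := exists l, Un_cv (sq_sum F) l.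

Lemma lattice_sum_cv F : summable F -> Un_cv (sq_sum F) (lattice_sum F).
Proof. intros H. unfold lattice_sum. apply epsilon_spec. exact H. Qed.

Lemma lattice_sum_unique F l : Un_cv (sq_sum F) l -> lattice_sum F = l.
Proof. intros H. apply (UL_sequence (sq_sum F)); auto. apply lattice_sum_cv. exists l; auto. Qed.

Lemma lattice_decay_summable F K C p : lattice_decay F K C p -> summable F.
Proof. intros HF. destruct (lattice_decay_cv F K C p HF) as [l [Hl _]]. exists l; exact Hl. Qed.

Lemma lattice_decay_tail F K C p : lattice_decay F K C p ->
  forall N, (K <= N)%nat -> Rabs (lattice_sum F - sq_sum F N) <= decay_tail C p N.
Proof.
  intros HF. destruct (lattice_decay_cv F K C p HF) as [l [Hl Ht]].
  rewrite (lattice_sum_unique F l Hl). exact Ht.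
Qed.

(** * Linearity and symmetries of lattice sums *)

Lemma lattice_sum_ext F G : (forall m n, F m n = G m n) -> lattice_sum F = lattice_sum G.
Proof.
  intros H. replace G with F; [reflexivity|].
  apply functional_extensionality; intro m. apply functional_extensionality; intro n. apply H.
Qed.

Lemma summable_ext F G : (forall m n, F m n = G m n) -> summable F -> summable G.
Proof.
  intros H. replace G with F; [auto|].
  apply functional_extensionality; intro m. apply functional_extensionality; intro n. apply H.
Qed.

Lemma sq_sum_lin a b F G N :
  sq_sum (fun m n => a * F m n + b * G m n) N = a * sq_sum F N + b * sq_sum G N.
Proof.
  unfold sq_sum. rewrite !scal_sum, <- sum_plus. apply sum_eq. intros i _.
  rewrite (Rmult_comm _ a), (Rmult_comm _ b), !scal_sum, <- sum_plus.
  apply sum_eq. intros j _. destruct andb; ring.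
Qed.

Lemma Un_cv_const c : Un_cv (fun _ => c) c.
Proof. intros e He. exists 0%nat. intros. unfold Rdist. rewrite Rminus_diag, Rabs_R0. exact He. Qed.

Lemma sq_sum_lin_cv a b F G : summable F -> summable G ->
  Un_cv (sq_sum (fun m n => a * F m n + b * G m n)) (a * lattice_sum F + b * lattice_sum G).
Proof.
  intros HF HG. apply lattice_sum_cv in HF. apply lattice_sum_cv in HG.
  replace (sq_sum (fun m n => a * F m n + b * G m n)) with (fun N => a * sq_sum F N + b * sq_sum G N)
    by (apply functional_extensionality; intros; symmetry; apply sq_sum_lin).
  apply CV_plus; apply CV_mult; auto using Un_cv_const.
Qed.

Lemma summable_lin a b F G : summable F -> summable G -> summable (fun m n => a * F m n + b * G m n).
Proof. intros HF HG. eexists. apply sq_sum_lin_cv; auto. Qed.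

Lemma lattice_sum_lin a b F G : summable F -> summable G ->
  lattice_sum (fun m n => a * F m n + b * G m n) = a * lattice_sum F + b * lattice_sum G.
Proof. intros HF HG. apply lattice_sum_unique, sq_sum_lin_cv; auto. Qed.

Lemma summable_scal a F : summable F -> summable (fun m n => a * F m n).
Proof. intros HF. apply (summable_ext (fun m n => a * F m n + 0 * F m n)); [intros; ring|]. apply summable_lin; auto. Qed.

Lemma lattice_sum_scal a F : summable F -> lattice_sum (fun m n => a * F m n) = a * lattice_sum F.
Proof.
  intros HF. rewrite (lattice_sum_ext _ (fun m n => a * F m n + 0 * F m n)) by (intros; ring).
  rewrite lattice_sum_lin by auto. ring.
Qed.

Lemma summable_plus F G : summable F -> summable G -> summable (fun m n => F m n + G m n).
Proof. intros HF HG. apply (summable_ext (fun m n => 1 * F m n + 1 * G m n)); [intros; ring|]. apply summable_lin; auto. Qed.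

Lemma lattice_sum_plus F G : summable F -> summable G ->
  lattice_sum (fun m n => F m n + G m n) = lattice_sum F + lattice_sum G.
Proof.
  intros HF HG. rewrite (lattice_sum_ext _ (fun m n => 1 * F m n + 1 * G m n)) by (intros; ring).
  rewrite lattice_sum_lin by auto. ring.
Qed.

Lemma sum_f_R0_swap (a : nat -> nat -> R) N M :
  sum_f_R0 (fun i => sum_f_R0 (fun j => a i j) M) N = sum_f_R0 (fun j => sum_f_R0 (fun i => a i j) N) M.
Proof.
  induction N as [|N IH]; [reflexivity|].
  rewrite tech5, IH, <- sum_plus. apply sum_eq. intros j _. rewrite tech5. reflexivity.
Qed.

Lemma sq_sum_swap F N : sq_sum (fun m n => F n m) N = sq_sum F N.
Proof.
  unfold sq_sum. rewrite sum_f_R0_swap. apply sum_eq. intros i _. apply sum_eq. intros j _.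
  rewrite Bool.andb_comm. reflexivity.
Qed.

Lemma lattice_sum_swap F : lattice_sum (fun m n => F n m) = lattice_sum F.
Proof.
  unfold lattice_sum. replace (sq_sum (fun m n => F n m)) with (sq_sum F); [reflexivity|].
  apply functional_extensionality. intros N. symmetry. apply sq_sum_swap.
Qed.

Definition window_sum (g : Z -> R) (a : Z) (M : nat) : R := sum_f_R0 (fun i => g (a + Z.of_nat i)%Z) M.

Lemma centered_sum_window g N : centered_sum g N = window_sum g (- Z.of_nat N) (2 * N).
Proof. apply sum_eq. intros. f_equal. lia. Qed.

Lemma window_sum_succ g a M : window_sum g (a + 1) M = window_sum g a M + g (a + Z.of_nat M + 1)%Z - g a.
Proof.
  unfold window_sum. assert (H := tech5 (fun i => g (a + Z.of_nat i)%Z) M).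
  rewrite sum_f_R0_shift in H.
  replace (sum_f_R0 (fun i => g (a + 1 + Z.of_nat i)%Z) M)
    with (sum_f_R0 (fun i => g (a + Z.of_nat (S i))%Z) M) by (apply sum_eq; intros; f_equal; lia).
  replace (a + Z.of_nat M + 1)%Z with (a + Z.of_nat (S M))%Z by lia.
  replace (g a) with (g (a + Z.of_nat 0)%Z) by (f_equal; lia). lra.
Qed.

Lemma window_sum_shift_bound g a M t B :
  (forall j, (j < t)%nat -> Rabs (g (a + Z.of_nat j)%Z) <= B /\ Rabs (g (a + Z.of_nat j + Z.of_nat M + 1)%Z) <= B) ->
  Rabs (window_sum g (a + Z.of_nat t) M - window_sum g a M) <= 2 * INR t * B.
Proof.
  induction t as [|t IH]; intros H.
  - rewrite Z.add_0_r, Rminus_diag, Rabs_R0. simpl. lra.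
  - replace (a + Z.of_nat (S t))%Z with (a + Z.of_nat t + 1)%Z by lia.
    rewrite window_sum_succ, S_INR. destruct (H t ltac:(lia)) as [H1 H2].
    specialize (IH ltac:(intros j Hj; apply H; lia)).
    set (D := window_sum g (a + Z.of_nat t) M - window_sum g a M) in *.
    replace (window_sum g (a + Z.of_nat t) M + g (a + Z.of_nat t + Z.of_nat M + 1)%Z - g (a + Z.of_nat t)%Z
      - window_sum g a M) with (D + g (a + Z.of_nat t + Z.of_nat M + 1)%Z - g (a + Z.of_nat t)%Z) by (unfold D; ring).
    pose proof (Rabs_triang (D + g (a + Z.of_nat t + Z.of_nat M + 1)%Z) (- g (a + Z.of_nat t)%Z)).
    pose proof (Rabs_triang D (g (a + Z.of_nat t + Z.of_nat M + 1)%Z)).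
    rewrite Rabs_Ropp in *. unfold Rminus. lra.
Qed.

Lemma sum_f_R0_rev (a : nat -> R) M : sum_f_R0 a M = sum_f_R0 (fun i => a (M - i)%nat) M.
Proof.
  induction M as [|M IH]; [reflexivity|].
  rewrite (sum_f_R0_shift (fun i => a (S M - i)%nat)), tech5, IH, Nat.sub_0_r, Rplus_comm. reflexivity.
Qed.

Lemma centered_sum_opp g N : centered_sum (fun m => g (- m)%Z) N = centered_sum g N.
Proof. unfold centered_sum. rewrite sum_f_R0_rev. apply sum_eq. intros i Hi. f_equal. lia. Qed.

(* In row [n], [m -> -m-n] is a reflection followed by a translation by [|n|], so the
   two centered row sums differ by at most [2|n|] terms, all far from the origin. *)
Lemma centered_sum_shear_row (h : Z -> R) (N : nat) (n : Z) B :
  (- Z.of_nat N <= n <= Z.of_nat N)%Z ->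
  (forall m, (Z.abs m + Z.abs n >= Z.of_nat N + 1)%Z -> Rabs (h m) <= B) ->
  Rabs (centered_sum (fun m => h (- m - n)%Z) N - centered_sum h N) <= 2 * INR N * B.
Proof.
  intros Hn Hh.
  assert (HB : 0 <= B) by (eapply Rle_trans; [apply Rabs_pos | apply (Hh (Z.of_nat N + 1)%Z); lia]).
  rewrite (centered_sum_opp (fun z => h (z - n)%Z)), !centered_sum_window.
  replace (window_sum (fun z => h (z - n)%Z) (- Z.of_nat N) (2 * N))
    with (window_sum h (- Z.of_nat N - n) (2 * N)) by (apply sum_eq; intros; f_equal; lia).
  assert (HNB : 2 * INR (Z.abs_nat n) * B <= 2 * INR N * B).
  { apply Rmult_le_compat_r, Rmult_le_compat_l; auto; [lra|]. apply le_INR. lia. }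
  eapply Rle_trans; [|exact HNB].
  destruct (Z_le_gt_dec 0 n).
  - set (a := (- Z.of_nat N - n)%Z).
    replace (- Z.of_nat N)%Z with (a + Z.of_nat (Z.abs_nat n))%Z by (unfold a; lia).
    rewrite <- Rabs_Ropp, Ropp_minus_distr.
    apply window_sum_shift_bound. intros j Hj. split; apply Hh; unfold a; lia.
  - replace (- Z.of_nat N - n)%Z with (- Z.of_nat N + Z.of_nat (Z.abs_nat n))%Z by lia.
    apply window_sum_shift_bound. intros j Hj. split; apply Hh; lia.
Qed.

Section Shear.

Variables (F : Z -> Z -> R) (K : nat) (C p : R).
Hypothesis HF : lattice_decay F K C p.

Lemma sq_sum_shear_diff N : INR K <= (INR N + 1) / 2 ->
  Rabs (sq_sum (fun m n => F (- m - n)%Z n) N - sq_sum F N)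
    <= (2 * INR N + 1) * (2 * INR N * (C * Rpower ((INR N + 1) / 2) (- p))).
Proof.
  destruct HF as (HK & HC & Hp & Hb). intros HN.
  rewrite <- (sq_sum_swap (fun m n => F (- m - n)%Z n)), <- (sq_sum_swap F), !sq_sum_centered,
    <- centered_sum_minus.
  apply centered_sum_bound. intros n Hn.
  rewrite (centered_sum_ext _ (fun m => punctured F (- m - n)%Z n)),
    (centered_sum_ext (fun m => punctured (fun m n => F n m) n m) (fun m => punctured F m n)).
  2,3: intros m _; unfold punctured;
    destruct (Z.eqb_spec n 0), (Z.eqb_spec m 0), (Z.eqb_spec (- m - n) 0); simpl; auto; lia.
  apply (centered_sum_shear_row (fun m => punctured F m n) N n); [exact Hn|].
  intros m Hm.
  assert (Hsum : INR N + 1 <= Rabs (IZR m) + Rabs (IZR n)).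
  { rewrite <- !abs_IZR, <- plus_IZR, INR_IZR_INZ, <- plus_IZR. apply IZR_le. lia. }
  pose proof (sup_norm_ge_l m n). pose proof (sup_norm_ge_r m n).
  pose proof (INR_ge_1 K HK).
  rewrite punctured_far by lra.
  eapply Rle_trans; [apply Hb; lra|].
  apply Rmult_le_compat_l; [lra|]. apply Rpower_opp_le_compat; lra.
Qed.

Lemma sq_sum_shear_cv : Un_cv (sq_sum (fun m n => F (- m - n)%Z n)) (lattice_sum F).
Proof.
  assert (HcvF := lattice_sum_cv F (lattice_decay_summable F K C p HF)).
  destruct HF as (HK & HC & Hp & _).
  intros e He.
  destruct (HcvF (e / 2) ltac:(lra)) as [N1 HN1].
  destruct (Rpower_opp_lt (p - 2) (e / (2 * (16 * C + 1)))) as [X0 [HX0 HX0s]];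
    [lra | apply Rdiv_lt_0_compat; lra |].
  destruct (INR_unbounded (2 * X0 + 2 * INR K)) as [N2 HN2].
  exists (max N1 N2). intros N HN. unfold Rdist.
  pose proof (le_INR N2 N ltac:(lia)). pose proof (pos_INR K).
  specialize (HN1 N ltac:(lia)). unfold Rdist in HN1.
  set (X := (INR N + 1) / 2) in *.
  assert (HX : X0 <= X) by (unfold X; lra).
  specialize (sq_sum_shear_diff N ltac:(unfold X in *; lra)) as Hdiff. fold X in Hdiff.
  specialize (HX0s X HX).
  assert (Hpow : Rpower X (- (p - 2)) = X * X * Rpower X (- p)).
  { rewrite <- Rpower_2, <- Rpower_plus by lra. f_equal. ring. }
  assert (HXp := Rpower_pos X (- p)).
  assert (Hb1 : (2 * INR N + 1) * (2 * INR N * (C * Rpower X (- p))) <= 16 * C * Rpower X (- (p - 2))).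
  { assert (HX1 : 1 / 2 <= X) by (unfold X; pose proof (pos_INR N); lra).
    rewrite Hpow. replace (INR N) with (2 * X - 1) by (unfold X; lra).
    assert (0 <= C * Rpower X (- p)) by (apply Rmult_le_pos; lra). nra. }
  assert (Hb2 : 16 * C * Rpower X (- (p - 2)) <= e / 2).
  { apply Rlt_le in HX0s. apply (Rmult_le_compat_l (16 * C + 1)) in HX0s; [|lra].
    replace ((16 * C + 1) * (e / (2 * (16 * C + 1)))) with (e / 2) in HX0s by (field; lra).
    pose proof (Rpower_pos X (- (p - 2))). nra. }
  replace (sq_sum (fun m n => F (- m - n)%Z n) N - lattice_sum F)
    with ((sq_sum (fun m n => F (- m - n)%Z n) N - sq_sum F N) + (sq_sum F N - lattice_sum F)) by ring.
  eapply Rle_lt_trans; [apply Rabs_triang|]. lra.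
Qed.

Lemma lattice_sum_shear : lattice_sum (fun m n => F (- m - n)%Z n) = lattice_sum F.
Proof. apply lattice_sum_unique, sq_sum_shear_cv. Qed.

End Shear.

(** * Termwise differentiation and continuity *)

Lemma derivable_pt_lim_sum_f_R0 (a a' : nat -> R -> R) M t :
  (forall i, (i <= M)%nat -> derivable_pt_lim (a i) t (a' i t)) ->
  derivable_pt_lim (fun u => sum_f_R0 (fun i => a i u) M) t (sum_f_R0 (fun i => a' i t) M).
Proof.
  induction M as [|M IH]; intros H; [apply H; lia|].
  apply (derivable_pt_lim_plus (fun u => sum_f_R0 (fun i => a i u) M) (a (S M))); auto.
Qed.

Lemma derivable_pt_lim_sq_sum (F F' : R -> Z -> Z -> R) t N :
  (forall m n, (m <> 0 \/ n <> 0)%Z -> derivable_pt_lim (fun u => F u m n) t (F' t m n)) ->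
  derivable_pt_lim (fun u => sq_sum (F u) N) t (sq_sum (F' t) N).
Proof.
  intros H. unfold sq_sum.
  apply (derivable_pt_lim_sum_f_R0 (fun i u => _) (fun i u => _)). intros i _.
  apply (derivable_pt_lim_sum_f_R0 (fun j u => _) (fun j u => _)). intros j _. cbv beta zeta.
  destruct andb eqn:E; [apply derivable_pt_lim_const|].
  apply H. apply Bool.andb_false_iff in E. destruct E as [E|E]; apply Z.eqb_neq in E; lia.
Qed.

Lemma derivable_pt_lim_lattice_sum (F F' : R -> Z -> Z -> R) c (r : posreal) K C p :
  (forall t, Boule c r t -> summable (F t)) ->
  (forall t, Boule c r t -> lattice_decay (F' t) K C p) ->
  (forall t m n, Boule c r t -> (m <> 0 \/ n <> 0)%Z -> derivable_pt_lim (fun u => F u m n) t (F' t m n)) ->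
  forall t, Boule c r t -> derivable_pt_lim (fun u => lattice_sum (F u)) t (lattice_sum (F' t)).
Proof.
  intros Hcv Hb Hd.
  apply (CVU_derivable (fun N u => sq_sum (F u) N) (fun N u => sq_sum (F' u) N)).
  - intros e He. destruct (Hb c (Boule_center c r)) as (_ & HC & Hp & _).
    destruct (decay_tail_lt K C p HC Hp e He) as [N0 HN0].
    exists N0. intros N y HN Hy. destruct (HN0 N HN) as [HKN Hlt].
    eapply Rle_lt_trans; [apply (lattice_decay_tail _ _ _ _ (Hb y Hy)); auto | exact Hlt].
  - intros x Hx. apply lattice_sum_cv. auto.
  - intros N x Hx. apply derivable_pt_lim_sq_sum. auto.
Qed.

Section RealContinuity.

Context {U : UniformSpace}.

Lemma continuous_Rplus (f g : U -> R) z : continuous f z -> continuous g z -> continuous (fun w => f w + g w) z.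
Proof. apply (continuous_plus f g). Qed.

Lemma continuous_Rminus (f g : U -> R) z : continuous f z -> continuous g z -> continuous (fun w => f w - g w) z.
Proof. apply (continuous_minus f g). Qed.

Lemma continuous_Ropp (f : U -> R) z : continuous f z -> continuous (fun w => - f w) z.
Proof. apply (continuous_opp f). Qed.

Lemma continuous_Rmult (f g : U -> R) z : continuous f z -> continuous g z -> continuous (fun w => f w * g w) z.
Proof. apply (continuous_mult f g). Qed.

Lemma continuous_Rinv_comp (f : U -> R) z : continuous f z -> f z <> 0 -> continuous (fun w => / f w) z.
Proof. intros Hf Hz. apply (continuous_comp f Rinv); auto. apply continuous_Rinv; auto. Qed.

Lemma continuous_pow (f : U -> R) z k : continuous f z -> continuous (fun w => f w ^ k) z.
Proof.
  intros Hf. induction k as [|k IH]; [apply continuous_const|]. apply continuous_Rmult; auto.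
Qed.

Lemma continuous_comp_continuity_pt (f : U -> R) (g : R -> R) z :
  continuous f z -> continuity_pt g (f z) -> continuous (fun w => g (f w)) z.
Proof. intros Hf Hg. apply (continuous_comp f g); auto. apply continuity_pt_filterlim; auto. Qed.

Lemma continuous_sum_f_R0 (a : nat -> U -> R) M z :
  (forall i, (i <= M)%nat -> continuous (a i) z) -> continuous (fun w => sum_f_R0 (fun i => a i w) M) z.
Proof.
  induction M as [|M IH]; intros H; [apply H; lia|].
  apply continuous_Rplus; [apply IH; auto | apply H; lia].
Qed.

End RealContinuity.

Lemma continuous_R2_box (F : R -> R -> R) x0 y0 :
  continuous (fun w : R * R => F (fst w) (snd w)) (x0, y0) ->
  forall e, 0 < e -> exists d, 0 < d /\ forall x y, Rabs (x - x0) < d -> Rabs (y - y0) < d ->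
    Rabs (F x y - F x0 y0) < e.
Proof.
  intros H e He. apply filterlim_locally with (eps := mkposreal e He) in H.
  destruct H as [d Hd]. exists d. split; [apply cond_pos|]. intros x y Hx Hy. apply (Hd (x, y)). split; auto.
Qed.

Lemma continuous_sq_sum (F : R -> R -> Z -> Z -> R) N z :
  (forall m n, (m <> 0 \/ n <> 0)%Z -> continuous (fun w => F (fst w) (snd w) m n) z) ->
  continuous (fun w => sq_sum (F (fst w) (snd w)) N) z.
Proof.
  intros H. unfold sq_sum.
  apply (continuous_sum_f_R0 (fun i w => _)). intros i _.
  apply (continuous_sum_f_R0 (fun j w => _)). intros j _. cbv beta zeta.
  destruct andb eqn:E; [apply continuous_const|].
  apply H. apply Bool.andb_false_iff in E. destruct E as [E|E]; apply Z.eqb_neq in E; lia.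
Qed.

Lemma lattice_sum_continuous_box (F : R -> R -> Z -> Z -> R) x0 y0 rho K C p :
  0 < rho ->
  (forall x y, Rabs (x - x0) <= rho -> Rabs (y - y0) <= rho -> lattice_decay (F x y) K C p) ->
  (forall m n, (m <> 0 \/ n <> 0)%Z -> continuous (fun w => F (fst w) (snd w) m n) (x0, y0)) ->
  forall e, 0 < e -> exists d, 0 < d /\ forall x y, Rabs (x - x0) < d -> Rabs (y - y0) < d ->
    Rabs (lattice_sum (F x y) - lattice_sum (F x0 y0)) < e.
Proof.
  intros Hrho Hb Hc e He.
  assert (Hb0 : lattice_decay (F x0 y0) K C p) by (apply Hb; rewrite Rminus_diag, Rabs_R0; lra).
  pose proof Hb0 as (_ & HC & Hp & _).
  destruct (decay_tail_lt K C p HC Hp (e / 3) ltac:(lra)) as [N HN].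
  destruct (HN N (le_n _)) as [HKN Hlt].
  destruct (continuous_R2_box (fun x y => sq_sum (F x y) N) x0 y0 (continuous_sq_sum F N _ Hc) (e / 3)
    ltac:(lra)) as [d [Hd Hdd]].
  exists (Rmin d rho). split; [apply Rmin_case; lra|].
  intros x y Hx Hy.
  pose proof (Rmin_l d rho). pose proof (Rmin_r d rho).
  specialize (Hdd x y ltac:(lra) ltac:(lra)).
  pose proof (lattice_decay_tail _ _ _ _ (Hb x y ltac:(lra) ltac:(lra)) N HKN) as T1.
  pose proof (lattice_decay_tail _ _ _ _ Hb0 N HKN) as T2.
  replace (lattice_sum (F x y) - lattice_sum (F x0 y0)) with
    ((lattice_sum (F x y) - sq_sum (F x y) N) + (sq_sum (F x y) N - sq_sum (F x0 y0) N)
      - (lattice_sum (F x0 y0) - sq_sum (F x0 y0) N)) by ring.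
  pose proof (Rabs_triang ((lattice_sum (F x y) - sq_sum (F x y) N) + (sq_sum (F x y) N - sq_sum (F x0 y0) N))
    (- (lattice_sum (F x0 y0) - sq_sum (F x0 y0) N))).
  pose proof (Rabs_triang (lattice_sum (F x y) - sq_sum (F x y) N) (sq_sum (F x y) N - sq_sum (F x0 y0) N)).
  rewrite Rabs_Ropp in *. unfold Rminus at 1. lra.
Qed.

Ltac continuous_R2 :=
  repeat match goal with
  | |- continuous (fun w => @?a w + @?b w) _ => apply (continuous_Rplus a b)
  | |- continuous (fun w => @?a w - @?b w) _ => apply (continuous_Rminus a b)
  | |- continuous (fun w => - @?a w) _ => apply (continuous_Ropp a)
  | |- continuous (fun w => @?a w * @?b w) _ => apply (continuous_Rmult a b)
  | |- continuous (fun w => @?a w ^ _) _ => apply (continuous_pow a)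
  | |- continuous (fun w => / @?a w) _ =>
      apply (continuous_Rinv_comp a); [| cbv beta; cbn [fst snd]; try apply pow_nonzero; assumption]
  | |- continuous (fun w => fst w) _ => apply continuous_fst
  | |- continuous (fun w => snd w) _ => apply continuous_snd
  | |- continuous (fun w => _) _ => apply continuous_const
  end.

(** * The quadratic form and the summands of [E_f] *)

Definition qform (x y : R) (m n : Z) : R := / y * (IZR m + x * IZR n) ^ 2 + y * IZR n ^ 2.

Definition qform_dx x y m n := 2 * IZR n * (IZR m + x * IZR n) / y.
Definition qform_dy x y m n := IZR n ^ 2 - (IZR m + x * IZR n) ^ 2 / y ^ 2.
Definition qform_dxx (x y : R) (m n : Z) := 2 * IZR n ^ 2 / y.
Definition qform_dxy x y m n := - (2 * IZR n * (IZR m + x * IZR n)) / y ^ 2.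
Definition qform_dyy x y m n := 2 * (IZR m + x * IZR n) ^ 2 / y ^ 3.

Definition qform_dir x y u1 u2 m n := qform_dx x y m n * u1 + qform_dy x y m n * u2.
Definition qform_dir2 x y u1 u2 v1 v2 m n :=
  qform_dxx x y m n * (u1 * v1) + qform_dxy x y m n * (u1 * v2 + u2 * v1) + qform_dyy x y m n * (u2 * v2).

Lemma qform_line_deriv x y b e t m n : y + t * e <> 0 ->
  derivable_pt_lim (fun u => qform (x + u * b) (y + u * e) m n) t (qform_dir (x + t * b) (y + t * e) b e m n).
Proof.
  intros H. apply is_derive_Reals. unfold qform, qform_dir, qform_dx, qform_dy.
  auto_derive; [auto | field; auto].
Qed.

Lemma qform_dir_line_deriv x y b e u1 u2 t m n : y + t * e <> 0 ->
  derivable_pt_lim (fun u => qform_dir (x + u * b) (y + u * e) u1 u2 m n) t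
    (qform_dir2 (x + t * b) (y + t * e) u1 u2 b e m n).
Proof.
  intros H. apply is_derive_Reals.
  unfold qform_dir2, qform_dir, qform_dx, qform_dy, qform_dxx, qform_dxy, qform_dyy.
  auto_derive; [repeat split; auto; apply Rmult_integral_contrapositive; split; auto; lra | field; auto].
Qed.

Definition E_term (f : R -> R) A x y m n := f (A * qform x y m n).
Definition E_term_dir (f1 : R -> R) A x y u1 u2 m n := f1 (A * qform x y m n) * (A * qform_dir x y u1 u2 m n).
Definition E_term_dir2 (f1 f2 : R -> R) A x y u1 u2 v1 v2 m n :=
  f2 (A * qform x y m n) * (A * qform_dir x y u1 u2 m n) * (A * qform_dir x y v1 v2 m n)
  + f1 (A * qform x y m n) * (A * qform_dir2 x y u1 u2 v1 v2 m n).

Lemma E_term_line_deriv f f1 A x y b e t m n :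
  y + t * e <> 0 ->
  derivable_pt_lim f (A * qform (x + t * b) (y + t * e) m n) (f1 (A * qform (x + t * b) (y + t * e) m n)) ->
  derivable_pt_lim (fun u => E_term f A (x + u * b) (y + u * e) m n) t
    (E_term_dir f1 A (x + t * b) (y + t * e) b e m n).
Proof.
  intros Hy Hf. apply (derivable_pt_lim_comp (fun u => A * qform (x + u * b) (y + u * e) m n) f); auto.
  apply derivable_pt_lim_scal, qform_line_deriv; auto.
Qed.

Lemma E_term_dir_line_deriv f1 f2 A x y b e u1 u2 t m n :
  y + t * e <> 0 ->
  derivable_pt_lim f1 (A * qform (x + t * b) (y + t * e) m n) (f2 (A * qform (x + t * b) (y + t * e) m n)) ->
  derivable_pt_lim (fun u => E_term_dir f1 A (x + u * b) (y + u * e) u1 u2 m n) t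
    (E_term_dir2 f1 f2 A (x + t * b) (y + t * e) u1 u2 b e m n).
Proof.
  intros Hy Hf.
  assert (H1 : derivable_pt_lim (fun u => f1 (A * qform (x + u * b) (y + u * e) m n)) t
      (f2 (A * qform (x + t * b) (y + t * e) m n) * (A * qform_dir (x + t * b) (y + t * e) b e m n))).
  { apply (derivable_pt_lim_comp (fun u => A * qform (x + u * b) (y + u * e) m n) f1); auto.
    apply derivable_pt_lim_scal, qform_line_deriv; auto. }
  assert (H2 : derivable_pt_lim (fun u => A * qform_dir (x + u * b) (y + u * e) u1 u2 m n) t
      (A * qform_dir2 (x + t * b) (y + t * e) u1 u2 b e m n)).
  { apply derivable_pt_lim_scal, qform_dir_line_deriv; auto. }
  replace (E_term_dir2 f1 f2 A (x + t * b) (y + t * e) u1 u2 b e m n) with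
    (f2 (A * qform (x + t * b) (y + t * e) m n) * (A * qform_dir (x + t * b) (y + t * e) b e m n)
       * (A * qform_dir (x + t * b) (y + t * e) u1 u2 m n)
     + f1 (A * qform (x + t * b) (y + t * e) m n) * (A * qform_dir2 (x + t * b) (y + t * e) u1 u2 b e m n))
    by (unfold E_term_dir2; ring).
  exact (derivable_pt_lim_mult _ _ _ _ _ H1 H2).
Qed.

Lemma sqrt3_bounds : 17/10 < sqrt 3 < 7/4.
Proof. assert (H := sqrt_sqrt 3 ltac:(lra)). assert (H0 := sqrt_pos 3). split; nra. Qed.

(* A box around the hexagonal point [(1/2, sqrt 3 / 2)] on which all bounds below are uniform. *)
Definition hex_box x y := 3/10 <= x <= 7/10 /\ 13/20 <= y <= 11/10.

Lemma hex_box_near x y : Rabs (x - 1/2) <= 1/5 -> Rabs (y - sqrt 3 / 2) <= 1/5 -> hex_box x y.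
Proof.
  intros Hx Hy. pose proof sqrt3_bounds.
  apply Rabs_le_between in Hx. apply Rabs_le_between in Hy. unfold hex_box. lra.
Qed.

Lemma hex_box_center : hex_box (1/2) (sqrt 3 / 2).
Proof. apply hex_box_near; rewrite Rminus_diag, Rabs_R0; lra. Qed.

Lemma Rabs_mult_le a b A B : Rabs a <= A -> Rabs b <= B -> Rabs (a * b) <= A * B.
Proof. intros H1 H2. rewrite Rabs_mult. apply Rmult_le_compat; auto; apply Rabs_pos. Qed.

Lemma sup_norm_sq m n : sup_norm m n * sup_norm m n <= IZR m ^ 2 + IZR n ^ 2.
Proof.
  assert (Hsq : forall a, Rabs a * Rabs a = a ^ 2) by (intros a; rewrite <- Rabs_mult, Rabs_pos_eq; nra).
  unfold sup_norm. apply Rmax_case_strong; intros _; rewrite Hsq; nra.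
Qed.

Section QformBounds.

Variables (x y : R) (m n : Z).
Hypothesis Hxy : hex_box x y.

Let k := sup_norm m n.
Let w := IZR m + x * IZR n.

Lemma sup_norm_nonneg : 0 <= k.
Proof. eapply Rle_trans; [apply Rabs_pos | apply sup_norm_ge_l]. Qed.

Lemma hex_box_w : Rabs w <= 2 * k.
Proof.
  destruct Hxy as [Hx _]. unfold w. eapply Rle_trans; [apply Rabs_triang|].
  rewrite Rabs_mult, (Rabs_pos_eq x) by lra.
  pose proof (sup_norm_ge_l m n) as Hm. pose proof (sup_norm_ge_r m n) as Hn. fold k in Hm, Hn.
  pose proof (Rabs_pos (IZR n)). nra.
Qed.

Lemma hex_box_inv_y : Rabs (/ y) <= 2.
Proof.
  destruct Hxy as [_ Hy]. rewrite Rabs_pos_eq by (apply Rlt_le, Rinv_0_lt_compat; lra).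
  apply (Rmult_le_reg_l y); [lra|]. rewrite Rinv_r; lra.
Qed.

Lemma qform_lower : k * k / 10 <= qform x y m n.
Proof.
  destruct Hxy as [Hx Hy].
  pose proof (sup_norm_sq m n) as Hk. fold k in Hk.
  assert (Hiy : 10/11 <= / y) by (apply (Rmult_le_reg_l y); [lra | rewrite Rinv_r; lra]).
  replace (IZR m) with (w - x * IZR n) in Hk by (unfold w; ring).
  unfold qform. fold w.
  assert (0 <= w ^ 2) by nra. assert (0 <= IZR n ^ 2) by nra. assert (x * x <= 1/2) by nra.
  assert ((w - x * IZR n) ^ 2 <= 2 * w ^ 2 + 2 * (x * x) * IZR n ^ 2)
    by (pose proof (pow2_ge_0 (w + x * IZR n)); nra).
  assert (0 <= (/ y - 10/11) * w ^ 2) by (apply Rmult_le_pos; lra).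
  assert (0 <= (y - 13/20) * IZR n ^ 2) by (apply Rmult_le_pos; lra).
  assert (0 <= (1/2 - x * x) * IZR n ^ 2) by (apply Rmult_le_pos; lra).
  lra.
Qed.

Lemma qform_partials_bound :
  Rabs (qform_dx x y m n) <= 100 * (k * k) /\ Rabs (qform_dy x y m n) <= 100 * (k * k) /\
  Rabs (qform_dxx x y m n) <= 100 * (k * k) /\ Rabs (qform_dxy x y m n) <= 100 * (k * k) /\
  Rabs (qform_dyy x y m n) <= 100 * (k * k).
Proof.
  destruct Hxy as [_ Hy].
  pose proof sup_norm_nonneg. pose proof hex_box_w as Hw. pose proof hex_box_inv_y as Hiy.
  pose proof (sup_norm_ge_r m n) as Hn. fold k in Hn.
  unfold qform_dx, qform_dy, qform_dxx, qform_dxy, qform_dyy, Rdiv. fold w.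
  repeat split.
  - replace (2 * IZR n * w * / y) with (2 * (IZR n * w * / y)) by ring.
    rewrite Rabs_mult, (Rabs_pos_eq 2) by lra.
    assert (Rabs (IZR n * w * / y) <= k * (2 * k) * 2) by repeat (apply Rabs_mult_le; auto).
    nra.
  - replace (IZR n ^ 2 - w ^ 2 * / y ^ 2) with (IZR n * IZR n - w * w * (/ y * / y)) by (field; lra).
    eapply Rle_trans; [apply Rabs_triang|]. rewrite Rabs_Ropp.
    assert (Rabs (IZR n * IZR n) <= k * k) by (apply Rabs_mult_le; auto).
    assert (Rabs (w * w * (/ y * / y)) <= 2 * k * (2 * k) * (2 * 2)) by repeat (apply Rabs_mult_le; auto).
    nra.
  - replace (2 * IZR n ^ 2 * / y) with (2 * (IZR n * IZR n * / y)) by ring.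
    rewrite Rabs_mult, (Rabs_pos_eq 2) by lra.
    assert (Rabs (IZR n * IZR n * / y) <= k * k * 2) by repeat (apply Rabs_mult_le; auto).
    nra.
  - replace (- (2 * IZR n * w) * / y ^ 2) with (- (2 * (IZR n * w * (/ y * / y)))) by (field; lra).
    rewrite Rabs_Ropp, Rabs_mult, (Rabs_pos_eq 2) by lra.
    assert (Rabs (IZR n * w * (/ y * / y)) <= k * (2 * k) * (2 * 2)) by repeat (apply Rabs_mult_le; auto).
    nra.
  - replace (2 * w ^ 2 * / y ^ 3) with (2 * (w * w * (/ y * / y * / y))) by (field; lra).
    rewrite Rabs_mult, (Rabs_pos_eq 2) by lra.
    assert (Rabs (w * w * (/ y * / y * / y)) <= 2 * k * (2 * k) * (2 * 2 * 2)) by repeat (apply Rabs_mult_le; auto).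
    nra.
Qed.

Lemma qform_dir_bound u1 u2 : Rabs u1 <= 1 -> Rabs u2 <= 1 -> Rabs (qform_dir x y u1 u2 m n) <= 200 * (k * k).
Proof.
  intros H1 H2. destruct qform_partials_bound as (Hdx & Hdy & _).
  unfold qform_dir. eapply Rle_trans; [apply Rabs_triang|].
  assert (Rabs (qform_dx x y m n * u1) <= 100 * (k * k) * 1) by (apply Rabs_mult_le; auto).
  assert (Rabs (qform_dy x y m n * u2) <= 100 * (k * k) * 1) by (apply Rabs_mult_le; auto).
  lra.
Qed.

Lemma qform_dir2_bound u1 u2 v1 v2 : Rabs u1 <= 1 -> Rabs u2 <= 1 -> Rabs v1 <= 1 -> Rabs v2 <= 1 ->
  Rabs (qform_dir2 x y u1 u2 v1 v2 m n) <= 400 * (k * k).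
Proof.
  intros H1 H2 H3 H4. destruct qform_partials_bound as (_ & _ & Hxx & Hxy' & Hyy).
  assert (Hc : Rabs (u1 * v2 + u2 * v1) <= 1 * 1 + 1 * 1)
    by (eapply Rle_trans; [apply Rabs_triang | apply Rplus_le_compat; apply Rabs_mult_le; auto]).
  unfold qform_dir2. eapply Rle_trans; [apply Rabs_triang|].
  eapply Rle_trans; [apply Rplus_le_compat_r, Rabs_triang|].
  assert (Rabs (qform_dxx x y m n * (u1 * v1)) <= 100 * (k * k) * (1 * 1)) by (apply Rabs_mult_le; [auto | apply Rabs_mult_le; auto]).
  assert (Rabs (qform_dyy x y m n * (u2 * v2)) <= 100 * (k * k) * (1 * 1)) by (apply Rabs_mult_le; [auto | apply Rabs_mult_le; auto]).
  assert (Rabs (qform_dxy x y m n * (u1 * v2 + u2 * v1)) <= 100 * (k * k) * (1 * 1 + 1 * 1))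
    by (apply Rabs_mult_le; auto).
  lra.
Qed.

End QformBounds.

Lemma decay_normalize g j : decay g j -> exists eta C R0, 1 < eta /\ 0 <= C /\ 1 <= R0 /\
  forall r, R0 <= r -> Rabs (g r) <= C * Rpower r (- (eta + j)).
Proof.
  intros [eta [Heta [C [R0 [HR0 H]]]]].
  exists eta, (Rmax C 0), (Rmax R0 1). repeat split; auto using Rmax_r.
  intros r Hr. pose proof (Rmax_l R0 1). pose proof (Rpower_pos r (- (eta + j))).
  eapply Rle_trans; [apply H; lra|]. apply Rmult_le_compat_r; [lra | apply Rmax_l].
Qed.

Lemma decay_bound_weaken (g : R -> R) j e C R0 e' C' R0' :
  1 <= R0 -> R0 <= R0' -> e' <= e -> 0 <= C -> C <= C' ->
  (forall r, R0 <= r -> Rabs (g r) <= C * Rpower r (- (e + j))) ->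
  forall r, R0' <= r -> Rabs (g r) <= C' * Rpower r (- (e' + j)).
Proof.
  intros HR0 HR0' He HC HC' Hg r Hr. eapply Rle_trans; [apply Hg; lra|].
  pose proof (Rpower_pos r (- (e + j))).
  apply Rmult_le_compat; [lra | lra | lra | apply Rle_Rpower; lra].
Qed.

Lemma in_F_uniform_decay f f1 f2 : in_F f f1 f2 -> exists eta C R0, 1 < eta /\ 0 <= C /\ 1 <= R0 /\
  forall r, R0 <= r -> Rabs (f r) <= C * Rpower r (- (eta + 0)) /\
    Rabs (f1 r) <= C * Rpower r (- (eta + 1)) /\ Rabs (f2 r) <= C * Rpower r (- (eta + 2)).
Proof.
  intros (_ & _ & _ & D0 & D1 & D2).
  destruct (decay_normalize _ _ D0) as (e0 & C0 & R0 & He0 & HC0 & HR0 & H0).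
  destruct (decay_normalize _ _ D1) as (e1 & C1 & R1 & He1 & HC1 & HR1 & H1).
  destruct (decay_normalize _ _ D2) as (e2 & C2 & R2 & He2 & HC2 & HR2 & H2).
  set (e := Rmin e0 (Rmin e1 e2)). set (C := Rmax C0 (Rmax C1 C2)). set (R' := Rmax R0 (Rmax R1 R2)).
  assert (Hmin : e <= e0 /\ e <= e1 /\ e <= e2 /\ 1 < e).
  { unfold e. repeat split; try apply Rmin_glb_lt; try apply Rmin_glb_lt; auto;
      eauto using Rmin_l, Rle_trans, Rmin_r. }
  assert (Hmax : C0 <= C /\ C1 <= C /\ C2 <= C /\ R0 <= R' /\ R1 <= R' /\ R2 <= R').
  { unfold C, R'. repeat split; eauto using Rmax_l, Rle_trans, Rmax_r. }
  exists e, C, R'. repeat split; try lra.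
  all: eapply decay_bound_weaken; [| | | | | eassumption | ]; eauto; lra.
Qed.

(* Evaluating a decay bound at [A * Q] with [Q >= k^2/10] trades decay in [r] for
   decay in the lattice norm [k], at twice the exponent. *)
Lemma decay_at_quadratic (g : R -> R) j eta C R0 A Qv k :
  (forall r, R0 <= r -> Rabs (g r) <= C * Rpower r (- (eta + j))) ->
  0 <= C -> 0 < A -> 1 <= k -> k * k / 10 <= Qv -> R0 <= A * (k * k / 10) -> 0 <= eta + j ->
  Rabs (g (A * Qv)) <= C * Rpower (A / 10) (- (eta + j)) * Rpower k (- (2 * eta + 2 * j)).
Proof.
  intros Hg HC HA Hk HQ HR Hej.
  assert (Hpos : 0 < A * (k * k / 10)) by (apply Rmult_lt_0_compat; nra).
  eapply Rle_trans; [apply Hg; apply (Rle_trans _ _ _ HR), Rmult_le_compat_l; lra|].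
  rewrite Rmult_assoc. apply Rmult_le_compat_l; auto.
  eapply Rle_trans; [apply Rpower_opp_le_compat; [lra | split; [exact Hpos | apply Rmult_le_compat_l; lra]]|].
  right. replace (A * (k * k / 10)) with ((A / 10) * (k * k)) by field.
  rewrite <- Rpower_mult_distr, <- Rpower_2, Rpower_mult by nra. f_equal. f_equal. ring.
Qed.

Lemma Rpower_opp_mult_sq k c : 1 <= k -> Rpower k (- (c + 2)) * (k * k) = Rpower k (- c).
Proof. intros Hk. rewrite <- Rpower_2, <- Rpower_plus by lra. f_equal; ring. Qed.

Lemma lattice_threshold A R0 : 0 < A ->
  exists K0, (1 <= K0)%nat /\ forall k, INR K0 <= k -> 1 <= k /\ R0 <= A * (k * k / 10).
Proof.
  intros HA. destruct (INR_unbounded (Rabs (10 * R0 / A) + 1)) as [K0 HK0].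
  pose proof (Rle_abs (10 * R0 / A)). pose proof (Rabs_pos (10 * R0 / A)).
  exists K0. split.
  - destruct K0; [simpl in HK0; lra | lia].
  - intros k Hk. split; [lra|].
    assert (k <= k * k) by nra.
    apply (Rmult_le_reg_l (10 / A)); [apply Rdiv_lt_0_compat; lra|].
    replace (10 / A * (A * (k * k / 10))) with (k * k) by (field; lra).
    replace (10 / A * R0) with (10 * R0 / A) by (field; lra). lra.
Qed.

Section SummandDecay.

Variables (f f1 f2 : R -> R) (A eta C R0 : R) (K0 : nat).
Hypothesis HA : 0 < A.
Hypothesis HC : 0 <= C.
Hypothesis Heta : 1 < eta.
Hypothesis HK1 : (1 <= K0)%nat.
Hypothesis Hdec : forall r, R0 <= r -> Rabs (f r) <= C * Rpower r (- (eta + 0)) /\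
  Rabs (f1 r) <= C * Rpower r (- (eta + 1)) /\ Rabs (f2 r) <= C * Rpower r (- (eta + 2)).
Hypothesis HK0 : forall k, INR K0 <= k -> 1 <= k /\ R0 <= A * (k * k / 10).

Let D j := C * Rpower (A / 10) (- (eta + j)).

Lemma D_nonneg j : 0 <= D j.
Proof. apply Rmult_le_pos; [exact HC | left; apply Rpower_pos]. Qed.

Lemma E_term_decay x y : hex_box x y -> lattice_decay (E_term f A x y) K0 (D 0) (2 * eta).
Proof.
  intros Hxy. repeat split; auto using D_nonneg; [lra|]. intros m n Hk. destruct (HK0 _ Hk) as [Hk1 HkR].
  eapply Rle_trans; [apply (decay_at_quadratic f 0 eta C R0 A); auto using qform_lower; try lra;
    intros r Hr; apply Hdec, Hr|].
  right. unfold D. f_equal. f_equal. ring.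
Qed.

Lemma E_term_dir_decay x y u1 u2 : hex_box x y -> Rabs u1 <= 1 -> Rabs u2 <= 1 ->
  lattice_decay (E_term_dir f1 A x y u1 u2) K0 (D 1 * (A * 200)) (2 * eta).
Proof.
  intros Hxy Hu1 Hu2.
  repeat split; auto; [pose proof (D_nonneg 1); nra | lra |]. intros m n Hk. destruct (HK0 _ Hk) as [Hk1 HkR].
  set (k := sup_norm m n) in *.
  assert (H1 := decay_at_quadratic f1 1 eta C R0 A (qform x y m n) k ltac:(intros r Hr; apply Hdec, Hr)
    HC HA Hk1 (qform_lower x y m n Hxy) HkR ltac:(lra)).
  assert (H2 : Rabs (A * qform_dir x y u1 u2 m n) <= A * (200 * (k * k))).
  { rewrite Rabs_mult, (Rabs_pos_eq A) by lra. apply Rmult_le_compat_l; [lra | apply qform_dir_bound; auto]. }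
  eapply Rle_trans; [apply Rabs_mult_le; [exact H1 | exact H2]|].
  replace (2 * eta + 2 * 1) with (2 * eta + 2) by ring.
  rewrite <- (Rpower_opp_mult_sq k (2 * eta)) by auto. right. unfold D. ring.
Qed.

Lemma E_term_dir2_decay x y u1 u2 v1 v2 : hex_box x y ->
  Rabs u1 <= 1 -> Rabs u2 <= 1 -> Rabs v1 <= 1 -> Rabs v2 <= 1 ->
  lattice_decay (E_term_dir2 f1 f2 A x y u1 u2 v1 v2) K0
    (D 2 * (A * 200) * (A * 200) + D 1 * (A * 400)) (2 * eta).
Proof.
  intros Hxy Hu1 Hu2 Hv1 Hv2.
  repeat split; auto; [| lra |].
  { apply Rplus_le_le_0_compat; [apply Rmult_le_pos; [apply Rmult_le_pos|] | apply Rmult_le_pos];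
      auto using D_nonneg; lra. }
  intros m n Hk. destruct (HK0 _ Hk) as [Hk1 HkR]. set (k := sup_norm m n) in *.
  assert (H1 := decay_at_quadratic f1 1 eta C R0 A (qform x y m n) k ltac:(intros r Hr; apply Hdec, Hr)
    HC HA Hk1 (qform_lower x y m n Hxy) HkR ltac:(lra)).
  assert (H0 := decay_at_quadratic f2 2 eta C R0 A (qform x y m n) k ltac:(intros r Hr; apply Hdec, Hr)
    HC HA Hk1 (qform_lower x y m n Hxy) HkR ltac:(lra)).
  assert (Hdir : forall a b, Rabs a <= 1 -> Rabs b <= 1 -> Rabs (A * qform_dir x y a b m n) <= A * (200 * (k * k))).
  { intros a b Ha Hb. rewrite Rabs_mult, (Rabs_pos_eq A) by lra.
    apply Rmult_le_compat_l; [lra | apply qform_dir_bound; auto]. }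
  assert (H4 : Rabs (A * qform_dir2 x y u1 u2 v1 v2 m n) <= A * (400 * (k * k))).
  { rewrite Rabs_mult, (Rabs_pos_eq A) by lra. apply Rmult_le_compat_l; [lra | apply qform_dir2_bound; auto]. }
  unfold E_term_dir2. eapply Rle_trans; [apply Rabs_triang|].
  eapply Rle_trans; [apply Rplus_le_compat;
    [apply Rabs_mult_le; [apply Rabs_mult_le; [exact H0 | apply Hdir; auto] | apply Hdir; auto]
    | apply Rabs_mult_le; [exact H1 | exact H4]]|].
  replace (2 * eta + 2 * 1) with (2 * eta + 2) by ring.
  replace (2 * eta + 2 * 2) with ((2 * eta + 2) + 2) by ring.
  rewrite <- (Rpower_opp_mult_sq k (2 * eta)), <- (Rpower_opp_mult_sq k (2 * eta + 2)) by auto.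
  right. unfold D. ring.
Qed.

End SummandDecay.

(** * Moments of the hexagonal form *)

Definition hex_form (m n : Z) : R := IZR m ^ 2 + IZR m * IZR n + IZR n ^ 2.

Definition hex_term (g : R -> R) A (a b : nat) (m n : Z) : R :=
  g (2 * A / sqrt 3 * hex_form m n) * (IZR m ^ a * IZR n ^ b).

Definition moment (g : R -> R) A (a b : nat) : R := lattice_sum (hex_term g A a b).

Definition moment_decay (g : R -> R) A (d : nat) : Prop :=
  forall a b, (a + b = d)%nat -> exists K C p, lattice_decay (hex_term g A a b) K C p.

Lemma hex_form_swap m n : hex_form n m = hex_form m n.
Proof. unfold hex_form; ring. Qed.

Lemma hex_form_shear m n : hex_form (- m - n)%Z n = hex_form m n.
Proof. unfold hex_form; rewrite minus_IZR, opp_IZR; ring. Qed.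

Lemma hex_form_lower m n : sup_norm m n * sup_norm m n / 10 <= 2 / sqrt 3 * hex_form m n.
Proof.
  pose proof (sup_norm_sq m n). pose proof sqrt3_bounds.
  assert (Hq : sup_norm m n * sup_norm m n / 2 <= hex_form m n)
    by (unfold hex_form; pose proof (pow2_ge_0 (IZR m + IZR n)); nra).
  assert (H1 : 1 <= 2 / sqrt 3).
  { apply (Rmult_le_reg_l (sqrt 3)); [lra|]. replace (sqrt 3 * (2 / sqrt 3)) with 2 by (field; lra). lra. }
  assert (0 <= sup_norm m n * sup_norm m n) by nra.
  nra.
Qed.

Lemma monomial_bound a b m n : Rabs (IZR m ^ a * IZR n ^ b) <= sup_norm m n ^ (a + b).
Proof.
  rewrite Rabs_mult, <- !RPow_abs, pow_add.
  apply Rmult_le_compat; try apply pow_le, Rabs_pos; apply pow_maj_Rabs; rewrite Rabs_Rabsolu;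
    [apply sup_norm_ge_l | apply sup_norm_ge_r].
Qed.

Lemma moment_decay_of_bound g A eta C R0 K0 j :
  0 < A -> 0 <= C -> 1 < eta -> (1 <= K0)%nat ->
  (forall r, R0 <= r -> Rabs (g r) <= C * Rpower r (- (eta + INR j))) ->
  (forall k, INR K0 <= k -> 1 <= k /\ R0 <= A * (k * k / 10)) ->
  moment_decay g A (2 * j).
Proof.
  intros HA HC Heta HK1 Hg HK0 a b Hab. exists K0, (C * Rpower (A / 10) (- (eta + INR j))), (2 * eta).
  repeat split; auto; [apply Rmult_le_pos; [lra | left; apply Rpower_pos] | lra |].
  intros m n Hk. destruct (HK0 _ Hk) as [Hk1 HkR]. set (k := sup_norm m n) in *.
  unfold hex_term. replace (2 * A / sqrt 3 * hex_form m n) with (A * (2 / sqrt 3 * hex_form m n))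
    by (pose proof sqrt3_bounds; field; lra).
  assert (H1 := decay_at_quadratic g (INR j) eta C R0 A _ k Hg HC HA Hk1 (hex_form_lower m n) HkR
    ltac:(pose proof (pos_INR j); lra)).
  eapply Rle_trans; [apply Rabs_mult_le; [exact H1 | apply monomial_bound]|].
  fold k. rewrite Hab, pow_mult, <- (Rpower_pow j (k ^ 2)) by nra.
  rewrite Rmult_assoc. apply Rmult_le_compat_l; [apply Rmult_le_pos; [lra | left; apply Rpower_pos]|].
  right. replace (k ^ 2) with (Rpower k 2) by (rewrite Rpower_2; [ring | lra]).
  rewrite Rpower_mult, <- Rpower_plus. f_equal. ring.
Qed.

Lemma moment_decay_summable g A d a b : moment_decay g A d -> (a + b = d)%nat -> summable (hex_term g A a b).
Proof. intros Hd Hab. destruct (Hd a b Hab) as (K & C & p & H). exact (lattice_decay_summable _ _ _ _ H). Qed.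

Lemma moment_swap g A a b : moment g A a b = moment g A b a.
Proof.
  unfold moment. rewrite <- lattice_sum_swap. apply lattice_sum_ext. intros m n.
  unfold hex_term. rewrite hex_form_swap. ring.
Qed.

Lemma moment_shear g A d a b : moment_decay g A d -> (a + b = d)%nat ->
  lattice_sum (fun m n => g (2 * A / sqrt 3 * hex_form m n) * ((- IZR m - IZR n) ^ a * IZR n ^ b))
  = moment g A a b.
Proof.
  intros Hd Hab. destruct (Hd a b Hab) as (K & C & p & H).
  unfold moment. rewrite <- (lattice_sum_shear _ _ _ _ H). apply lattice_sum_ext. intros m n.
  unfold hex_term. rewrite hex_form_shear, minus_IZR, opp_IZR. reflexivity.
Qed.

Ltac summable_moments :=
  repeat first [apply summable_plus | apply summable_scal];
  match goal with H : moment_decay _ _ _ |- _ => eapply (moment_decay_summable _ _ _ _ _ H); reflexivity end.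

Ltac lattice_sum_expand :=
  repeat first
    [ rewrite lattice_sum_plus by summable_moments
    | rewrite lattice_sum_scal by summable_moments ].

Section Moments.

Variables (g : R -> R) (A : R).

Lemma moments_deg2 : moment_decay g A 2 ->
  moment g A 2 0 = moment g A 0 2 /\ moment g A 1 1 = - moment g A 0 2 / 2.
Proof.
  intros Hd. split; [apply moment_swap|].
  assert (Hsh := moment_shear g A 2 2 0 Hd eq_refl).
  rewrite (lattice_sum_ext _ (fun m n => hex_term g A 2 0 m n + (2 * hex_term g A 1 1 m n + hex_term g A 0 2 m n)))
    in Hsh by (intros; unfold hex_term; ring).
  revert Hsh. lattice_sum_expand.
  unfold moment. lra.
Qed.

Lemma moments_deg4 : moment_decay g A 4 ->
  moment g A 4 0 = moment g A 0 4 /\ moment g A 3 1 = - moment g A 0 4 / 2 /\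
  moment g A 1 3 = - moment g A 0 4 / 2 /\ moment g A 2 2 = moment g A 0 4 / 2.
Proof.
  intros Hd.
  assert (Hsh22 := moment_shear g A 4 2 2 Hd eq_refl).
  assert (Hsh31 := moment_shear g A 4 3 1 Hd eq_refl).
  rewrite (lattice_sum_ext _ (fun m n => hex_term g A 2 2 m n + (2 * hex_term g A 1 3 m n + hex_term g A 0 4 m n)))
    in Hsh22 by (intros; unfold hex_term; ring).
  rewrite (lattice_sum_ext _ (fun m n => -1 * (hex_term g A 3 1 m n
      + (3 * hex_term g A 2 2 m n + (3 * hex_term g A 1 3 m n + hex_term g A 0 4 m n)))))
    in Hsh31 by (intros; unfold hex_term; ring).
  revert Hsh22 Hsh31. lattice_sum_expand. fold (moment g A 2 2) (moment g A 3 1).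
  rewrite (moment_swap g A 4 0), (moment_swap g A 3 1). unfold moment. lra.
Qed.

End Moments.

Lemma sqrt3_pow_SS k : sqrt 3 ^ S (S k) = 3 * sqrt 3 ^ k.
Proof. rewrite <- (sqrt_sqrt 3) at 2 by lra. simpl. ring. Qed.

Ltac sqrt3_field :=
  pose proof sqrt3_bounds;
  field_simplify_eq; [rewrite ?sqrt3_pow_SS; ring | lra].

Lemma hex_qform A m n : A * qform (1/2) (sqrt 3 / 2) m n = 2 * A / sqrt 3 * hex_form m n.
Proof. unfold qform, hex_form. sqrt3_field. Qed.

Section HexPoint.

Variables (f1 f2 : R -> R) (A : R).

Let x0 := 1/2.
Let y0 := sqrt 3 / 2.

Lemma hex_E_term_dir_x m n : E_term_dir f1 A x0 y0 1 0 m n =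
  2 * A * sqrt 3 / 3 * (2 * hex_term f1 A 1 1 m n + hex_term f1 A 0 2 m n).
Proof.
  unfold E_term_dir, hex_term, x0, y0. rewrite hex_qform. set (u := f1 _).
  unfold qform_dir, qform_dx, qform_dy. sqrt3_field.
Qed.

Lemma hex_E_term_dir_y m n : E_term_dir f1 A x0 y0 0 1 m n =
  - (2 * A / 3) * (2 * hex_term f1 A 2 0 m n + (2 * hex_term f1 A 1 1 m n + -1 * hex_term f1 A 0 2 m n)).
Proof.
  unfold E_term_dir, hex_term, x0, y0. rewrite hex_qform. set (u := f1 _).
  unfold qform_dir, qform_dx, qform_dy. sqrt3_field.
Qed.

Lemma hex_E_term_dir2_xx m n : E_term_dir2 f1 f2 A x0 y0 1 0 1 0 m n =
  4 * A ^ 2 / 3 * (4 * hex_term f2 A 2 2 m n + (4 * hex_term f2 A 1 3 m n + hex_term f2 A 0 4 m n))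
  + 4 * A * sqrt 3 / 3 * hex_term f1 A 0 2 m n.
Proof.
  unfold E_term_dir2, hex_term, x0, y0. rewrite hex_qform. set (u := f1 _). set (v := f2 _).
  unfold qform_dir, qform_dir2, qform_dx, qform_dy, qform_dxx, qform_dxy, qform_dyy. sqrt3_field.
Qed.

Lemma hex_E_term_dir2_yy m n : E_term_dir2 f1 f2 A x0 y0 0 1 0 1 m n =
  4 * A ^ 2 / 9 * (4 * hex_term f2 A 4 0 m n + (8 * hex_term f2 A 3 1 m n
    + (-4 * hex_term f2 A 1 3 m n + hex_term f2 A 0 4 m n)))
  + 4 * A * sqrt 3 / 9 * (4 * hex_term f1 A 2 0 m n + (4 * hex_term f1 A 1 1 m n + hex_term f1 A 0 2 m n)).
Proof.
  unfold E_term_dir2, hex_term, x0, y0. rewrite hex_qform. set (u := f1 _). set (v := f2 _).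
  unfold qform_dir, qform_dir2, qform_dx, qform_dy, qform_dxx, qform_dxy, qform_dyy. sqrt3_field.
Qed.

Lemma hex_E_term_dir2_xy m n : E_term_dir2 f1 f2 A x0 y0 1 0 0 1 m n =
  - (4 * A ^ 2 * sqrt 3 / 9) * (4 * hex_term f2 A 3 1 m n + (6 * hex_term f2 A 2 2 m n + -1 * hex_term f2 A 0 4 m n))
  + - (4 * A / 3) * (2 * hex_term f1 A 1 1 m n + hex_term f1 A 0 2 m n).
Proof.
  unfold E_term_dir2, hex_term, x0, y0. rewrite hex_qform. set (u := f1 _). set (v := f2 _).
  unfold qform_dir, qform_dir2, qform_dx, qform_dy, qform_dxx, qform_dxy, qform_dyy. sqrt3_field.
Qed.

End HexPoint.

Lemma T_f_moments f1 f2 A :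
  T_f f1 f2 A = 4 * A * sqrt 3 / 3 * moment f1 A 0 2 + 4 * A ^ 2 / 3 * moment f2 A 0 4.
Proof.
  unfold T_f, moment. pose proof sqrt3_bounds.
  rewrite (lattice_sum_ext (fun m n => IZR n ^ 2 * f1 _) (hex_term f1 A 0 2)),
    (lattice_sum_ext (fun m n => IZR n ^ 4 * f2 _) (hex_term f2 A 0 4))
    by (intros; unfold hex_term, hex_form; ring).
  replace (4 * A / sqrt 3) with (4 * A * sqrt 3 / 3); [ring|].
  field_simplify_eq; [rewrite sqrt3_pow_SS; ring | lra].
Qed.

Section HexPointSums.

Variables (f1 f2 : R -> R) (A : R).
Hypothesis Hd1 : moment_decay f1 A 2.
Hypothesis Hd2 : moment_decay f2 A 4.

Lemma hex_gradient_x : lattice_sum (E_term_dir f1 A (1/2) (sqrt 3 / 2) 1 0) = 0.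
Proof.
  rewrite (lattice_sum_ext _ _ (hex_E_term_dir_x f1 A)). lattice_sum_expand.
  destruct (moments_deg2 f1 A Hd1) as [_ H11]. unfold moment in *. rewrite H11. field.
Qed.

Lemma hex_gradient_y : lattice_sum (E_term_dir f1 A (1/2) (sqrt 3 / 2) 0 1) = 0.
Proof.
  rewrite (lattice_sum_ext _ _ (hex_E_term_dir_y f1 A)). lattice_sum_expand.
  destruct (moments_deg2 f1 A Hd1) as [H20 H11]. unfold moment in *. rewrite H20, H11. field.
Qed.

Lemma hex_hessian_xx : lattice_sum (E_term_dir2 f1 f2 A (1/2) (sqrt 3 / 2) 1 0 1 0) = T_f f1 f2 A.
Proof.
  rewrite (lattice_sum_ext _ _ (hex_E_term_dir2_xx f1 f2 A)), T_f_moments. lattice_sum_expand.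
  destruct (moments_deg4 f2 A Hd2) as (_ & _ & H13 & H22). unfold moment in *. rewrite H13, H22. field.
Qed.

Lemma hex_hessian_yy : lattice_sum (E_term_dir2 f1 f2 A (1/2) (sqrt 3 / 2) 0 1 0 1) = T_f f1 f2 A.
Proof.
  rewrite (lattice_sum_ext _ _ (hex_E_term_dir2_yy f1 f2 A)), T_f_moments. lattice_sum_expand.
  destruct (moments_deg2 f1 A Hd1) as [H20 H11].
  destruct (moments_deg4 f2 A Hd2) as (H40 & H31 & H13 & _).
  unfold moment in *. rewrite H20, H11, H40, H31, H13. field.
Qed.

Lemma hex_hessian_xy : lattice_sum (E_term_dir2 f1 f2 A (1/2) (sqrt 3 / 2) 1 0 0 1) = 0.
Proof.
  rewrite (lattice_sum_ext _ _ (hex_E_term_dir2_xy f1 f2 A)). lattice_sum_expand.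
  destruct (moments_deg2 f1 A Hd1) as [_ H11].
  destruct (moments_deg4 f2 A Hd2) as (_ & H31 & _ & H22).
  unfold moment in *. rewrite H11, H31, H22. field.
Qed.

End HexPointSums.

Lemma E_term_dir2_continuous f1 f2 A x0 y0 u1 u2 v1 v2 m n : y0 <> 0 ->
  continuity_pt f1 (A * qform x0 y0 m n) -> continuity_pt f2 (A * qform x0 y0 m n) ->
  continuous (fun w => E_term_dir2 f1 f2 A (fst w) (snd w) u1 u2 v1 v2 m n) (x0, y0).
Proof.
  intros Hy0 H1 H2.
  assert (Hq : continuous (fun w => A * qform (fst w) (snd w) m n) (x0, y0))
    by (unfold qform; continuous_R2).
  assert (Hdir : forall a b, continuous (fun w => A * qform_dir (fst w) (snd w) a b m n) (x0, y0))
    by (intros; unfold qform_dir, qform_dx, qform_dy, Rdiv; continuous_R2).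
  assert (Hdir2 : continuous (fun w => A * qform_dir2 (fst w) (snd w) u1 u2 v1 v2 m n) (x0, y0))
    by (unfold qform_dir2, qform_dxx, qform_dxy, qform_dyy, Rdiv; continuous_R2).
  unfold E_term_dir2. apply continuous_Rplus; apply continuous_Rmult; auto.
  - apply continuous_Rmult; auto. apply (continuous_comp_continuity_pt _ f2); auto.
  - apply (continuous_comp_continuity_pt _ f1); auto.
Qed.

(** * Derivatives and extrema of [E_f] at the hexagonal point *)

Lemma qform_pos x y m n : hex_box x y -> (m <> 0 \/ n <> 0)%Z -> 0 < qform x y m n.
Proof.
  intros Hxy Hmn. pose proof (qform_lower x y m n Hxy). pose proof (sup_norm_ge_1 m n Hmn). nra.
Qed.

Lemma taylor_second_order_pos (g g1 g2 : R -> R) :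
  (forall s, 0 <= s <= 1 -> derivable_pt_lim g s (g1 s)) ->
  (forall s, 0 <= s <= 1 -> derivable_pt_lim g1 s (g2 s)) ->
  g1 0 = 0 -> (forall s, 0 <= s <= 1 -> 0 < g2 s) -> g 0 < g 1.
Proof.
  intros Dg Dg1 Hg10 Hg2.
  destruct (MVT_cor2 g g1 0 1 ltac:(lra) Dg) as [c [Hc Hc01]].
  destruct (MVT_cor2 g1 g2 0 c ltac:(lra) ltac:(intros s Hs; apply Dg1; lra)) as [c' [Hc' Hc'0]].
  assert (Hpos := Hg2 c' ltac:(lra)).
  rewrite Hg10 in Hc'. nra.
Qed.

Lemma quadratic_form_pos a b c T h1 h2 : 0 < T ->
  Rabs (a - T) < T / 4 -> Rabs b < T / 4 -> Rabs (c - T) < T / 4 -> (h1 <> 0 \/ h2 <> 0) ->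
  0 < h1 * h1 * a + 2 * h1 * h2 * b + h2 * h2 * c.
Proof.
  intros HT Ha Hb Hc Hh.
  apply Rabs_def2 in Ha. apply Rabs_def2 in Hb. apply Rabs_def2 in Hc.
  assert (Hn : 0 < h1 * h1 + h2 * h2)
    by (destruct Hh as [Hh|Hh]; [pose proof (Rsqr_pos_lt h1 Hh) | pose proof (Rsqr_pos_lt h2 Hh)];
        unfold Rsqr in *; nra).
  assert (2 * h1 * h2 * b >= - (T / 4) * (h1 * h1 + h2 * h2))
    by (pose proof (pow2_ge_0 (h1 - h2)); pose proof (pow2_ge_0 (h1 + h2)); nra).
  nra.
Qed.

Lemma E_term_dir_split f1 A x y h1 h2 m n :
  E_term_dir f1 A x y h1 h2 m n = h1 * E_term_dir f1 A x y 1 0 m n + h2 * E_term_dir f1 A x y 0 1 m n.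
Proof. unfold E_term_dir, qform_dir. ring. Qed.

Lemma E_term_dir2_split f1 f2 A x y h1 h2 m n :
  E_term_dir2 f1 f2 A x y h1 h2 h1 h2 m n =
  h1 * h1 * E_term_dir2 f1 f2 A x y 1 0 1 0 m n
  + (2 * h1 * h2 * E_term_dir2 f1 f2 A x y 1 0 0 1 m n + h2 * h2 * E_term_dir2 f1 f2 A x y 0 1 0 1 m n).
Proof. unfold E_term_dir2, qform_dir, qform_dir2. ring. Qed.

Lemma E_term_dir2_comm f1 f2 A x y u1 u2 v1 v2 m n :
  E_term_dir2 f1 f2 A x y u1 u2 v1 v2 m n = E_term_dir2 f1 f2 A x y v1 v2 u1 u2 m n.
Proof. unfold E_term_dir2, qform_dir2. ring. Qed.

Lemma Rabs_0_le_1 : Rabs 0 <= 1.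
Proof. rewrite Rabs_R0; lra. Qed.

Lemma Rabs_1_le_1 : Rabs 1 <= 1.
Proof. rewrite Rabs_R1; lra. Qed.

Section Main.

Variables (f f1 f2 : R -> R) (A eta C R0 : R) (K0 : nat).
Hypothesis HA : 0 < A.
Hypothesis HC : 0 <= C.
Hypothesis Heta : 1 < eta.
Hypothesis HK1 : (1 <= K0)%nat.
Hypothesis Hf' : forall r, 0 < r -> derivable_pt_lim f r (f1 r).
Hypothesis Hf'' : forall r, 0 < r -> derivable_pt_lim f1 r (f2 r).
Hypothesis Hf''_cont : forall r, 0 < r -> continuity_pt f2 r.
Hypothesis Hdec : forall r, R0 <= r -> Rabs (f r) <= C * Rpower r (- (eta + 0)) /\
  Rabs (f1 r) <= C * Rpower r (- (eta + 1)) /\ Rabs (f2 r) <= C * Rpower r (- (eta + 2)).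
Hypothesis HK0 : forall k, INR K0 <= k -> 1 <= k /\ R0 <= A * (k * k / 10).

Lemma f1_moment_decay : moment_decay f1 A 2.
Proof.
  apply (moment_decay_of_bound f1 A eta C R0 K0 1); auto.
  intros r Hr. replace (INR 1) with 1 by reflexivity. apply Hdec, Hr.
Qed.

Lemma f2_moment_decay : moment_decay f2 A 4.
Proof.
  apply (moment_decay_of_bound f2 A eta C R0 K0 2); auto.
  intros r Hr. replace (INR 2) with 2 by (simpl; ring). apply Hdec, Hr.
Qed.

Lemma summable_E_term x y : hex_box x y -> summable (E_term f A x y).
Proof. intros Hxy. eapply lattice_decay_summable, E_term_decay; eauto. Qed.

Lemma summable_E_term_dir x y u1 u2 : hex_box x y -> Rabs u1 <= 1 -> Rabs u2 <= 1 ->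
  summable (E_term_dir f1 A x y u1 u2).
Proof. intros. eapply lattice_decay_summable, E_term_dir_decay; eauto. Qed.

Lemma summable_E_term_dir2 x y u1 u2 v1 v2 : hex_box x y ->
  Rabs u1 <= 1 -> Rabs u2 <= 1 -> Rabs v1 <= 1 -> Rabs v2 <= 1 -> summable (E_term_dir2 f1 f2 A x y u1 u2 v1 v2).
Proof. intros. eapply lattice_decay_summable, E_term_dir2_decay; eauto. Qed.

Lemma derivable_E_line x y b e c (r : posreal) : Rabs b <= 1 -> Rabs e <= 1 ->
  (forall t, Boule c r t -> hex_box (x + t * b) (y + t * e)) ->
  forall t, Boule c r t ->
  derivable_pt_lim (fun u => lattice_sum (E_term f A (x + u * b) (y + u * e))) t
    (lattice_sum (E_term_dir f1 A (x + t * b) (y + t * e) b e)).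
Proof.
  intros Hb He Hbox.
  eapply (derivable_pt_lim_lattice_sum _ (fun t => E_term_dir f1 A (x + t * b) (y + t * e) b e) c r);
    [intros t Ht; apply summable_E_term; auto | intros t Ht; eapply E_term_dir_decay; eauto |].
  intros t m n Ht Hmn. destruct (Hbox t Ht) as [Hx Hy].
  apply E_term_line_deriv; [lra|]. apply Hf', Rmult_lt_0_compat, qform_pos; auto.
Qed.

Lemma derivable_E_dir_line x y b e u1 u2 c (r : posreal) :
  Rabs b <= 1 -> Rabs e <= 1 -> Rabs u1 <= 1 -> Rabs u2 <= 1 ->
  (forall t, Boule c r t -> hex_box (x + t * b) (y + t * e)) ->
  forall t, Boule c r t ->
  derivable_pt_lim (fun u => lattice_sum (E_term_dir f1 A (x + u * b) (y + u * e) u1 u2)) t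
    (lattice_sum (E_term_dir2 f1 f2 A (x + t * b) (y + t * e) u1 u2 b e)).
Proof.
  intros Hb He Hu1 Hu2 Hbox.
  eapply (derivable_pt_lim_lattice_sum _ (fun t => E_term_dir2 f1 f2 A (x + t * b) (y + t * e) u1 u2 b e) c r);
    [intros t Ht; apply summable_E_term_dir; auto | intros t Ht; eapply E_term_dir2_decay; eauto |].
  intros t m n Ht Hmn. destruct (Hbox t Ht) as [Hx Hy].
  apply E_term_dir_line_deriv; [lra|]. apply Hf'', Rmult_lt_0_compat, qform_pos; auto.
Qed.

Lemma derivable_pt_lim_axis_x (G : R -> R -> R) x y l :
  derivable_pt_lim (fun u => G (0 + u * 1) (y + u * 0)) x l -> derivable_pt_lim (fun t => G t y) x l.
Proof. apply derivable_pt_lim_ext. intros u. f_equal; ring. Qed.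

Lemma derivable_pt_lim_axis_y (G : R -> R -> R) x y l :
  derivable_pt_lim (fun u => G (x + u * 0) (0 + u * 1)) y l -> derivable_pt_lim (fun t => G x t) y l.
Proof. apply derivable_pt_lim_ext. intros u. f_equal; ring. Qed.

Let r20 := mkposreal (1/20) ltac:(lra).

Lemma hex_box_axis_x x y : Rabs (x - 1/2) < 1/10 -> Rabs (y - sqrt 3 / 2) < 1/10 ->
  forall t, Boule x r20 t -> hex_box (0 + t * 1) (y + t * 0).
Proof.
  intros Hx Hy t Ht. unfold Boule in Ht. simpl in Ht. apply hex_box_near.
  - replace (0 + t * 1 - 1/2) with ((t - x) + (x - 1/2)) by ring.
    eapply Rle_trans; [apply Rabs_triang | lra].
  - replace (y + t * 0) with y by ring. lra.
Qed.

Lemma hex_box_axis_y x y : Rabs (x - 1/2) < 1/10 -> Rabs (y - sqrt 3 / 2) < 1/10 ->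
  forall t, Boule y r20 t -> hex_box (x + t * 0) (0 + t * 1).
Proof.
  intros Hx Hy t Ht. unfold Boule in Ht. simpl in Ht. apply hex_box_near.
  - replace (x + t * 0) with x by ring. lra.
  - replace (0 + t * 1 - sqrt 3 / 2) with ((t - y) + (y - sqrt 3 / 2)) by ring.
    eapply Rle_trans; [apply Rabs_triang | lra].
Qed.

Lemma E_f_partial_x x y : Rabs (x - 1/2) < 1/10 -> Rabs (y - sqrt 3 / 2) < 1/10 ->
  derivable_pt_lim (fun t => E_f f t y A) x (lattice_sum (E_term_dir f1 A x y 1 0)).
Proof.
  intros Hx Hy. apply (derivable_pt_lim_axis_x (fun s t => lattice_sum (E_term f A s t))).
  replace (lattice_sum (E_term_dir f1 A x y 1 0))
    with (lattice_sum (E_term_dir f1 A (0 + x * 1) (y + x * 0) 1 0)) by (do 2 f_equal; ring).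
  apply (derivable_E_line 0 y 1 0 x r20); [apply Rabs_1_le_1 | apply Rabs_0_le_1 | | apply Boule_center].
  apply hex_box_axis_x; auto.
Qed.

Lemma E_f_partial_y x y : Rabs (x - 1/2) < 1/10 -> Rabs (y - sqrt 3 / 2) < 1/10 ->
  derivable_pt_lim (fun t => E_f f x t A) y (lattice_sum (E_term_dir f1 A x y 0 1)).
Proof.
  intros Hx Hy. apply (derivable_pt_lim_axis_y (fun s t => lattice_sum (E_term f A s t))).
  replace (lattice_sum (E_term_dir f1 A x y 0 1))
    with (lattice_sum (E_term_dir f1 A (x + y * 0) (0 + y * 1) 0 1)) by (do 2 f_equal; ring).
  apply (derivable_E_line x 0 0 1 y r20); [apply Rabs_0_le_1 | apply Rabs_1_le_1 | | apply Boule_center].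
  apply hex_box_axis_y; auto.
Qed.

Lemma E_dir_partial_x x y u1 u2 : Rabs (x - 1/2) < 1/10 -> Rabs (y - sqrt 3 / 2) < 1/10 ->
  Rabs u1 <= 1 -> Rabs u2 <= 1 ->
  derivable_pt_lim (fun t => lattice_sum (E_term_dir f1 A t y u1 u2)) x
    (lattice_sum (E_term_dir2 f1 f2 A x y u1 u2 1 0)).
Proof.
  intros Hx Hy Hu1 Hu2. apply (derivable_pt_lim_axis_x (fun s t => lattice_sum (E_term_dir f1 A s t u1 u2))).
  replace (lattice_sum (E_term_dir2 f1 f2 A x y u1 u2 1 0))
    with (lattice_sum (E_term_dir2 f1 f2 A (0 + x * 1) (y + x * 0) u1 u2 1 0)) by (do 2 f_equal; ring).
  apply (derivable_E_dir_line 0 y 1 0 u1 u2 x r20); auto; [apply Rabs_1_le_1 | apply Rabs_0_le_1 | |].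
  - apply hex_box_axis_x; auto.
  - apply Boule_center.
Qed.

Lemma E_dir_partial_y x y u1 u2 : Rabs (x - 1/2) < 1/10 -> Rabs (y - sqrt 3 / 2) < 1/10 ->
  Rabs u1 <= 1 -> Rabs u2 <= 1 ->
  derivable_pt_lim (fun t => lattice_sum (E_term_dir f1 A x t u1 u2)) y
    (lattice_sum (E_term_dir2 f1 f2 A x y u1 u2 0 1)).
Proof.
  intros Hx Hy Hu1 Hu2. apply (derivable_pt_lim_axis_y (fun s t => lattice_sum (E_term_dir f1 A s t u1 u2))).
  replace (lattice_sum (E_term_dir2 f1 f2 A x y u1 u2 0 1))
    with (lattice_sum (E_term_dir2 f1 f2 A (x + y * 0) (0 + y * 1) u1 u2 0 1)) by (do 2 f_equal; ring).
  apply (derivable_E_dir_line x 0 0 1 u1 u2 y r20); auto; [apply Rabs_0_le_1 | apply Rabs_1_le_1 | |].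
  - apply hex_box_axis_y; auto.
  - apply Boule_center.
Qed.

Lemma E_dir2_continuous_at_hex u1 u2 v1 v2 : Rabs u1 <= 1 -> Rabs u2 <= 1 -> Rabs v1 <= 1 -> Rabs v2 <= 1 ->
  forall e, 0 < e -> exists d, 0 < d /\ forall x y, Rabs (x - 1/2) < d -> Rabs (y - sqrt 3 / 2) < d ->
    Rabs (lattice_sum (E_term_dir2 f1 f2 A x y u1 u2 v1 v2)
      - lattice_sum (E_term_dir2 f1 f2 A (1/2) (sqrt 3 / 2) u1 u2 v1 v2)) < e.
Proof.
  intros Hu1 Hu2 Hv1 Hv2.
  eapply (lattice_sum_continuous_box (fun x y => E_term_dir2 f1 f2 A x y u1 u2 v1 v2) _ _ (1/5)); [lra | |].
  - intros x y Hx Hy. eapply E_term_dir2_decay; eauto. apply hex_box_near; auto.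
  - intros m n Hmn. pose proof sqrt3_bounds.
    assert (Hr : 0 < A * qform (1/2) (sqrt 3 / 2) m n) by (apply Rmult_lt_0_compat, qform_pos; auto using hex_box_center).
    apply E_term_dir2_continuous; [lra | | apply Hf''_cont, Hr].
    exact (derivable_continuous_pt f1 _ (exist _ _ (Hf'' _ Hr))).
Qed.

Lemma lattice_sum_E_term_dir2_split x y h1 h2 : hex_box x y ->
  lattice_sum (E_term_dir2 f1 f2 A x y h1 h2 h1 h2) =
  h1 * h1 * lattice_sum (E_term_dir2 f1 f2 A x y 1 0 1 0)
  + 2 * h1 * h2 * lattice_sum (E_term_dir2 f1 f2 A x y 1 0 0 1)
  + h2 * h2 * lattice_sum (E_term_dir2 f1 f2 A x y 0 1 0 1).
Proof.
  intros Hxy. rewrite (lattice_sum_ext _ _ (E_term_dir2_split f1 f2 A x y h1 h2)).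
  rewrite lattice_sum_plus, lattice_sum_scal, lattice_sum_plus, !lattice_sum_scal; try ring;
    repeat first [apply summable_E_term_dir2 | apply summable_plus | apply summable_scal];
    auto using Rabs_1_le_1, Rabs_0_le_1.
Qed.

(* [sigma] is [1] for the minimum and [-1] for the maximum. *)
Lemma E_hessian_definite_near_hex sigma : Rabs sigma = 1 -> 0 < sigma * T_f f1 f2 A ->
  exists d, 0 < d <= 1/10 /\ forall x y h1 h2, Rabs (x - 1/2) < d -> Rabs (y - sqrt 3 / 2) < d ->
    (h1 <> 0 \/ h2 <> 0) -> 0 < sigma * lattice_sum (E_term_dir2 f1 f2 A x y h1 h2 h1 h2).
Proof.
  intros Hsigma HT. set (T := T_f f1 f2 A) in *.
  assert (HabsT : Rabs T = sigma * T).
  { rewrite <- (Rmult_1_l (Rabs T)), <- Hsigma, <- Rabs_mult. apply Rabs_pos_eq. lra. }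
  assert (HT4 : 0 < Rabs T / 4) by lra.
  destruct (E_dir2_continuous_at_hex 1 0 1 0 Rabs_1_le_1 Rabs_0_le_1 Rabs_1_le_1 Rabs_0_le_1 _ HT4)
    as (d1 & Hd1 & Hxx).
  destruct (E_dir2_continuous_at_hex 1 0 0 1 Rabs_1_le_1 Rabs_0_le_1 Rabs_0_le_1 Rabs_1_le_1 _ HT4)
    as (d2 & Hd2 & Hxy).
  destruct (E_dir2_continuous_at_hex 0 1 0 1 Rabs_0_le_1 Rabs_1_le_1 Rabs_0_le_1 Rabs_1_le_1 _ HT4)
    as (d3 & Hd3 & Hyy).
  rewrite (hex_hessian_xx f1 f2 A f1_moment_decay f2_moment_decay), HabsT in Hxx.
  rewrite (hex_hessian_xy f1 f2 A f1_moment_decay f2_moment_decay), HabsT in Hxy.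
  rewrite (hex_hessian_yy f1 f2 A f1_moment_decay f2_moment_decay), HabsT in Hyy.
  fold T in Hxx, Hyy.
  exists (Rmin (1/10) (Rmin d1 (Rmin d2 d3))).
  pose proof (Rmin_l (1/10) (Rmin d1 (Rmin d2 d3))). pose proof (Rmin_r (1/10) (Rmin d1 (Rmin d2 d3))).
  pose proof (Rmin_l d1 (Rmin d2 d3)). pose proof (Rmin_r d1 (Rmin d2 d3)).
  pose proof (Rmin_l d2 d3). pose proof (Rmin_r d2 d3).
  split; [split; [repeat apply Rmin_glb_lt; lra | lra]|].
  intros x y h1 h2 Hx Hy Hh.
  rewrite lattice_sum_E_term_dir2_split by (apply hex_box_near; lra).
  specialize (Hxx x y ltac:(lra) ltac:(lra)). specialize (Hxy x y ltac:(lra) ltac:(lra)).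
  specialize (Hyy x y ltac:(lra) ltac:(lra)).
  replace (sigma * (h1 * h1 * lattice_sum (E_term_dir2 f1 f2 A x y 1 0 1 0)
      + 2 * h1 * h2 * lattice_sum (E_term_dir2 f1 f2 A x y 1 0 0 1)
      + h2 * h2 * lattice_sum (E_term_dir2 f1 f2 A x y 0 1 0 1)))
    with (h1 * h1 * (sigma * lattice_sum (E_term_dir2 f1 f2 A x y 1 0 1 0))
      + 2 * h1 * h2 * (sigma * lattice_sum (E_term_dir2 f1 f2 A x y 1 0 0 1))
      + h2 * h2 * (sigma * lattice_sum (E_term_dir2 f1 f2 A x y 0 1 0 1))) by ring.
  apply (quadratic_form_pos _ _ _ (sigma * T)); auto;
    rewrite <- ?Rmult_minus_distr_l, Rabs_mult, Hsigma, Rmult_1_l; rewrite ?Rminus_0_r in *; lra.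
Qed.

Lemma E_f_hex_strict_extremum sigma : Rabs sigma = 1 -> 0 < sigma * T_f f1 f2 A ->
  exists d, 0 < d /\ forall x y, Rabs (x - 1/2) < d -> Rabs (y - sqrt 3 / 2) < d ->
    (x, y) <> (1/2, sqrt 3 / 2) -> sigma * E_f f (1/2) (sqrt 3 / 2) A < sigma * E_f f x y A.
Proof.
  intros Hsigma HT. destruct (E_hessian_definite_near_hex sigma Hsigma HT) as (d & [Hd Hd10] & Hhess).
  set (y0 := sqrt 3 / 2) in *. pose proof sqrt3_bounds.
  exists d. split; [lra|]. intros x y Hx Hy Hne.
  set (h1 := x - 1/2) in *. set (h2 := y - y0) in *.
  assert (Hh : h1 <> 0 \/ h2 <> 0).
  { destruct (Req_dec h1 0), (Req_dec h2 0); auto. exfalso. apply Hne. unfold h1, h2 in *. f_equal; lra. }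
  assert (Hseg : forall s, Rabs s <= 3/2 -> Rabs (s * h1) <= 3/20 /\ Rabs (s * h2) <= 3/20).
  { intros s Hs. rewrite !Rabs_mult. pose proof (Rabs_pos h1). pose proof (Rabs_pos h2).
    pose proof (Rabs_pos s). split; nra. }
  set (r1 := mkposreal 1 ltac:(lra)).
  assert (Hbox : forall s, Boule (1/2) r1 s -> hex_box (1/2 + s * h1) (y0 + s * h2)).
  { intros s Hs. unfold Boule in Hs. simpl in Hs.
    destruct (Hseg s ltac:(apply Rabs_le; apply Rabs_def2 in Hs; lra)) as [Hs1 Hs2].
    apply hex_box_near; [replace (1/2 + s * h1 - 1/2) with (s * h1) by ring
      | replace (y0 + s * h2 - sqrt 3 / 2) with (s * h2) by (unfold y0; ring)]; lra. }
  assert (Hunit : forall s, 0 <= s <= 1 -> Boule (1/2) r1 s) by (intros s Hs; apply Rabs_def1; simpl; lra).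
  change (E_f f x y A) with (lattice_sum (E_term f A x y)).
  change (E_f f (1/2) y0 A) with (lattice_sum (E_term f A (1/2) y0)).
  replace (lattice_sum (E_term f A x y)) with (lattice_sum (E_term f A (1/2 + 1 * h1) (y0 + 1 * h2)))
    by (unfold h1, h2; do 2 f_equal; ring).
  replace (lattice_sum (E_term f A (1/2) y0)) with (lattice_sum (E_term f A (1/2 + 0 * h1) (y0 + 0 * h2)))
    by (do 2 f_equal; ring).
  apply (taylor_second_order_pos (fun s => sigma * lattice_sum (E_term f A (1/2 + s * h1) (y0 + s * h2)))
    (fun s => sigma * lattice_sum (E_term_dir f1 A (1/2 + s * h1) (y0 + s * h2) h1 h2))
    (fun s => sigma * lattice_sum (E_term_dir2 f1 f2 A (1/2 + s * h1) (y0 + s * h2) h1 h2 h1 h2))).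
  - intros s Hs. apply derivable_pt_lim_scal, (derivable_E_line _ _ _ _ (1/2) r1); auto; lra.
  - intros s Hs. apply derivable_pt_lim_scal, (derivable_E_dir_line _ _ _ _ _ _ (1/2) r1); auto; lra.
  - replace (1/2 + 0 * h1) with (1/2) by ring. replace (y0 + 0 * h2) with y0 by ring.
    rewrite (lattice_sum_ext _ _ (E_term_dir_split f1 A _ _ h1 h2)), lattice_sum_lin
      by (apply summable_E_term_dir; auto using hex_box_center, Rabs_1_le_1, Rabs_0_le_1).
    unfold y0. rewrite (hex_gradient_x f1 A f1_moment_decay), (hex_gradient_y f1 A f1_moment_decay). ring.
  - intros s Hs. pose proof (Rabs_pos h1). pose proof (Rabs_pos h2).
    apply Hhess; auto;
      [replace (1/2 + s * h1 - 1/2) with (s * h1) by ring | replace (y0 + s * h2 - y0) with (s * h2) by ring];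
      rewrite Rabs_mult, (Rabs_pos_eq s) by lra; nra.
Qed.

End Main.

Theorem proposition3p10 (f f1 f2 : R -> R) (A : R) :
  0 < A -> in_F f f1 f2 ->
  (exists (d : R) (Ex Ey : R -> R -> R), 0 < d /\
     (* Ex, Ey are the first partial derivatives near (1/2, sqrt3/2) *)
     (forall x y, Rabs (x - 1/2) < d -> Rabs (y - sqrt 3 / 2) < d ->
        derivable_pt_lim (fun t => E_f f t y A) x (Ex x y) /\
        derivable_pt_lim (fun t => E_f f x t A) y (Ey x y)) /\
     (* d^2/dxdx and d^2/dydy equal T_f(A) *)
     derivable_pt_lim (fun t => Ex t (sqrt 3 / 2)) (1/2) (T_f f1 f2 A) /\
     derivable_pt_lim (fun t => Ey (1/2) t) (sqrt 3 / 2) (T_f f1 f2 A) /\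
     (* mixed partials vanish *)
     derivable_pt_lim (fun t => Ex (1/2) t) (sqrt 3 / 2) 0 /\
     derivable_pt_lim (fun t => Ey t (sqrt 3 / 2)) (1/2) 0) /\
  (0 < T_f f1 f2 A -> strict_local_min (fun x y => E_f f x y A) (1/2) (sqrt 3 / 2)) /\
  (T_f f1 f2 A < 0 -> strict_local_max (fun x y => E_f f x y A) (1/2) (sqrt 3 / 2)).
Proof.
  intros HA HF.
  destruct (in_F_uniform_decay f f1 f2 HF) as (eta & C & R0 & Heta & HC & _ & Hdec).
  destruct HF as (Hf' & Hf'' & Hf''_cont & _).
  destruct (lattice_threshold A R0 HA) as (K0 & HK1 & HK0).
  assert (Hd1 : moment_decay f1 A 2) by (eapply f1_moment_decay; eauto).
  assert (Hd2 : moment_decay f2 A 4) by (eapply f2_moment_decay; eauto).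
  assert (H0x : Rabs (1/2 - 1/2) < 1/10) by (rewrite Rminus_diag, Rabs_R0; lra).
  assert (H0y : Rabs (sqrt 3 / 2 - sqrt 3 / 2) < 1/10) by (rewrite Rminus_diag, Rabs_R0; lra).
  split; [|split].
  - exists (1/10), (fun x y => lattice_sum (E_term_dir f1 A x y 1 0)),
      (fun x y => lattice_sum (E_term_dir f1 A x y 0 1)).
    repeat split; [lra | eapply E_f_partial_x; eauto | eapply E_f_partial_y; eauto | | | |].
    + refine (eq_ind _ (derivable_pt_lim _ _) _ _ (hex_hessian_xx f1 f2 A Hd1 Hd2)).
      eapply E_dir_partial_x; eauto; apply Rabs_1_le_1 || apply Rabs_0_le_1.
    + refine (eq_ind _ (derivable_pt_lim _ _) _ _ (hex_hessian_yy f1 f2 A Hd1 Hd2)).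
      eapply E_dir_partial_y; eauto; apply Rabs_1_le_1 || apply Rabs_0_le_1.
    + refine (eq_ind _ (derivable_pt_lim _ _) _ _ (hex_hessian_xy f1 f2 A Hd1 Hd2)).
      eapply E_dir_partial_y; eauto; apply Rabs_1_le_1 || apply Rabs_0_le_1.
    + refine (eq_ind _ (derivable_pt_lim _ _) _ _ (hex_hessian_xy f1 f2 A Hd1 Hd2)).
      rewrite (lattice_sum_ext _ _ (E_term_dir2_comm f1 f2 A _ _ 1 0 0 1)).
      eapply E_dir_partial_x; eauto; apply Rabs_1_le_1 || apply Rabs_0_le_1.
  - intros HT. destruct (E_f_hex_strict_extremum f f1 f2 A eta C R0 K0 HA HC Heta HK1 Hf' Hf'' Hf''_cont Hdec HK0 1)
      as (d & Hd & Hmin); [apply Rabs_R1 | lra |].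
    exists d. split; [exact Hd|]. intros x y Hx Hy _ Hne. specialize (Hmin x y Hx Hy Hne). lra.
  - intros HT. destruct (E_f_hex_strict_extremum f f1 f2 A eta C R0 K0 HA HC Heta HK1 Hf' Hf'' Hf''_cont Hdec HK0 (-1))
      as (d & Hd & Hmax); [rewrite Rabs_left; lra | lra |].
    exists d. split; [exact Hd|]. intros x y Hx Hy _ Hne. specialize (Hmax x y Hx Hy Hne). lra.
Qed.
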